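(* Let $\mathcal R$ be a strong CCTRS and $s,t\in\mathcal T(\mathcal G,\mathcal V)$. (1) If $s\rightharpoonup^* t$ is a complexity-conscious reduction with cost $N$, then there is a context-sensitive reduction $\zeta(s)\to^*_{\Xi(\mathcal R),\mu}\zeta(t)$ with cost $N$. (2) If $s\rightharpoonup^\infty$, then there is an infinite $(\Xi(\mathcal R),\mu)$-reduction starting from $\zeta(s)$.
   Context: A CCTRS over $\mathcal F$ is a set $\mathcal R$ of conditional rules each of the form $f(\ell_1,\dots,\ell_n)\to r\Leftarrow a_1\approx b_1,\dots,a_k\approx b_k$ (defined symbols are roots of left-hand sides, others constructors; constructor terms contain only constructors and variables) where $\ell_1,\dots,\ell_n,b_1,\dots,b_k$ are constructor terms, the terms $f(\ell_1,\dots,\ell_n),b_1,\dots,b_k$ pairwise share no variables, $\mathrm{Var}(r)\subseteq\mathrm{Var}(\ell_1,\dots,\ell_n,b_1,\dots,b_k)$, and $\mathrm{Var}(a_i)\subseteq\mathrm{Var}(\ell_1,\dots,\ell_n,b_1,\dots,b_{i-1})$. $\mathcal R{\restriction}f$ is the set of rules with left-hand root $f$. A strong CCTRS is a CCTRS with each $\mathcal R{\restriction}f$ finite and each $f(\ell_1,\dots,\ell_n)$ and $b_j$ linear. Let $m_f=|\mathcal R{\restriction}f|$ (0 for constructors), with fixed enumeration $\rho^f_1,\dots,\rho^f_{m_f}$. Labeled reduction: $\mathcal G$ consists of the constructors and symbols $f_R$ ($R\subseteq\mathcal R{\restriction}f$, same arity as $f$); $\mathrm{label}$ replaces each defined $f$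 by $f_{\mathcal R\restriction f}$; $\mathrm{erase}$ removes labels; labeled normal forms are terms over constructors, symbols $f_\emptyset$ and variables. $s\rightharpoonup t$ is defined inductively: either (i, ''$\bot$-step'') there are $p$ and a rule $\rho\colon\ell\to r\Leftarrow c$ with $s|_p=f_R(s_1,\dots,s_n)$, $\rho\in R$, $t=s[f_{R\setminus\{\rho\}}(s_1,\dots,s_n)]_p$, and linear labeled normal forms $u_1,\dots,u_n$ on fresh variables and $\sigma$ with $s|_p=f_R(u_1,\dots,u_n)\sigma$ and $f(\mathrm{erase}(u_1),\dots,\mathrm{erase}(u_n))$ not unifiable with $\ell$; or (ii) there are $p$, $\rho\colon f(\ell_1,\dots,\ell_n)\to r\Leftarrow a_1\approx b_1,\dots,a_k\approx b_k$, $\sigma$, $0\le j\le k$ with $s|_p=f_R(\ell_1\sigma,\dots,\ell_n\sigma)$, $\rho\in R$, $\mathrm{label}(a_i)\sigma\rightharpoonup^*b_i\sigma$ for $1\le i\le j$, and either (successful) $j=k$, $t=s[\mathrm{label}(r)\sigma]_p$, or (failed) $j<k$, $\mathrm{label}(a_{j+1})\sigma\rightharpoonup^*u\tau$ for a linear labeled normal form $u$ with $\mathrm{erase}(u)$ not unifiable with $b_{j+1}$, and $t=s[f_{R\setminus\{\rho\}}(\ell_1\sigma,\dots,\ell_n\sigma)]_p$. A complexity-conscious reduction is a labeled reduction together with chosen witnessing condition reductions; its cost is the sum of its step costs, where a $\bot$-step costs $0$, a successful step costs $1$ plus the costs of the $k$ condition reductions, and a failed step costs the sum of the costs of the $j$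 condition reductions and of $\mathrm{label}(a_{j+1})\sigma\rightharpoonup^*u\tau$. $s\rightharpoonup_\rhd t$ if there are $p$, $\rho$ as in (ii), $\sigma$, $0\le j<k$ with $s|_p=f_R(\ell_1\sigma,\dots,\ell_n\sigma)$, $\rho\in R$, $\mathrm{label}(a_i)\sigma\rightharpoonup^*b_i\sigma$ for $i\le j$, and $t=\mathrm{label}(a_{j+1})\sigma$; $s\rightharpoonup^\infty$ means an infinite sequence of $\rightharpoonup\cup\rightharpoonup_\rhd$ steps from $s$. The transformed system: signature $\mathcal H$ with constants $\bot,\top$ ($\mu=\emptyset$); every $f\in\mathcal F$ of arity $n$ as a symbol of arity $n+m_f$ with $\mu(f)=\{1,\dots,n\}$; and for every defined $f$ of arity $n$, every $\rho^f_i$ with $k>0$ conditions and $1\le j\le k$ a symbol $f_i^j$ of arity $n+m_f+j-1$ with $\mu(f_i^j)=\{n+i+j-1\}$. A position is active in $t$ if it is $\epsilon$ or $iq$ with $i\in\mu(\mathrm{root}(t))$ and $q$ active in $t|_i$; $\to_{\Xi(\mathcal R),\mu}$ rewrites only at active positions. $\xi_\star$ ($\star\in\{\bot,\top\}$): identity on variables, homomorphic on constructors, $f(t_1..t_n)\mapsto f(\xi_\star(t_1),\dots,\xi_\star(t_n),\star,\dots,\star)$ ($m_f$ copies) for defined $f$; $\bot$-patterns are linear terms $\xi_\bot(t)$. For a linear constructor term $t$: $\mathrm{AP}(x)=\emptyset$, and $\mathrm{AP}(f(t_1,\dots,t_n))$ consists of $g(x_1,\dots,x_m)$ for every constructor $g\neq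 f$ of arity $m$, $g(x_1,\dots,x_m,\bot,\dots,\bot)$ for every defined $g$ of arity $m$, and $f(x_1,\dots,x_{i-1},u,x_{i+1},\dots,x_n)$ for $u\in\mathrm{AP}(t_i)$ (fresh distinct $x$'s). Notation: $\langle t_1,\dots,t_n\rangle[u_1,\dots,u_j]_i$ is $t_1,\dots,t_{i-1},u_1,\dots,u_j,t_{i+1},\dots,t_n$. For the $i$-th rule $\rho_i\colon f(\vec\ell)\to r\Leftarrow a_1\approx b_1,\dots,a_k\approx b_k$ of $\mathcal R{\restriction}f$ and fresh distinct $x_1,\dots,x_{m_f},y_1,\dots,y_n$, $\Xi(\mathcal R)$ contains: $(1)$ if $k=0$: $f(\vec\ell,\langle\vec x\rangle[\top]_i)\to\xi_\top(r)$; if $k>0$: $(2)$ $f(\vec\ell,\langle\vec x\rangle[\top]_i)\to f_i^1(\vec\ell,\langle\vec x\rangle[\xi_\top(a_1)]_i)$, $(3)$ $f_i^k(\vec\ell,\langle\vec x\rangle[b_1,\dots,b_k]_i)\to\xi_\top(r)$, $(4)$ for $1\le j<k$: $f_i^j(\vec\ell,\langle\vec x\rangle[b_1,\dots,b_j]_i)\to f_i^{j+1}(\vec\ell,\langle\vec x\rangle[b_1,\dots,b_j,\xi_\top(a_{j+1})]_i)$, $(5)$ for $1\le j\le k$ and $v\in\mathrm{AP}(b_j)$ (fresh variables): $f_i^j(\vec\ell,\langle\vec x\rangle[b_1,\dots,b_{j-1},v]_i)\to f(\vec\ell,\langle\vec x\rangle[\bot]_i)$; and for any $k$: $(6)$ for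 $1\le j\le n$ and $v\in\mathrm{AP}(\ell_j)$ (fresh variables): $f(\langle\vec y\rangle[v]_j,\langle\vec x\rangle[\top]_i)\to f(\langle\vec y\rangle[v]_j,\langle\vec x\rangle[\bot]_i)$. The cost of a $(\Xi(\mathcal R),\mu)$-reduction is the number of steps using rules of type (1) or (3). The map $\zeta\colon\mathcal T(\mathcal G,\mathcal V)\to\mathcal T(\mathcal H,\mathcal V)$: identity on variables, homomorphic on constructors, $\zeta(f_R(t_1,\dots,t_n))=f(\zeta(t_1),\dots,\zeta(t_n),c_1,\dots,c_{m_f})$ with $c_i=\top$ iff $\rho^f_i\in R$, else $\bot$. *)

From Stdlib Require Import List Arith.
Import ListNotations.


Inductive term (S : Type) : Type :=
| Var (x : nat)
| App (g : S) (args : list (term S)).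
Arguments Var {S} x.
Arguments App {S} g args.

Fixpoint subst {S : Type} (sigma : nat -> term S) (t : term S) : term S :=
  match t with
  | Var x => sigma x
  | App g args => App g (map (subst sigma) args)
  end.

Fixpoint vars {S : Type} (t : term S) : list nat :=
  match t with
  | Var x => [x]
  | App _ args => flat_map vars args
  end.

Definition vars_list {S : Type} (ts : list (term S)) : list nat := flat_map vars ts.

Definition linear {S : Type} (t : term S) : Prop := NoDup (vars t).

Definition disjoint (l1 l2 : list nat) : Prop := forall x, In x l1 -> ~ In x l2.

Definition unifiable {S : Type} (s t : term S) : Prop :=
  exists theta : nat -> term S, subst theta s = subst theta t.

Inductive wf {S : Type} (arS : S -> nat) (valid : S -> Prop) : term S -> Prop :=
| wf_var x : wf arS valid (Var x)
| wf_app g args : valid g -> length args = arS g -> Forall (wf arS valid) args ->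
    wf arS valid (App g args).

(* a conditional rule  f(l_1..l_n) -> r <= a_1 ~ b_1, ..., a_k ~ b_k ;
   the root f is given by the list in which the rule is stored *)
Record rule (F : Type) := mkRule {
  r_args : list (term F);
  r_rhs : term F;
  r_conds : list (term F * term F) }.
Arguments r_args {F} r.
Arguments r_rhs {F} r.
Arguments r_conds {F} r.

(* A system: signature F with arities, and for every f the fixed enumeration
   rho^f_1, ..., rho^f_{m_f} of R|f (finite, as required of a strong CCTRS). *)
Record system := mkSystem {
  fs : Type;
  ar : fs -> nat;
  rules : fs -> list (rule fs) }.

Definition fterm (Sy : system) := term (fs Sy).

(* m_f = |R|f| ; constructors are exactly the symbols with m_f = 0 *)
Definition m (Sy : system) (f : fs Sy) : nat := length (rules Sy f).

Definition wf_f (Sy : system) (t : fterm Sy) : Prop := wf (ar Sy) (fun _ => True) t.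

Inductive cterm (Sy : system) : fterm Sy -> Prop :=
| ct_var x : cterm Sy (Var x)
| ct_app c args : m Sy c = 0 -> Forall (cterm Sy) args -> cterm Sy (App c args).

Definition pairwise_disjoint (ls : list (list nat)) : Prop :=
  forall i j, i < length ls -> j < length ls -> i <> j ->
    disjoint (nth i ls []) (nth j ls []).

Definition cctrs_rule (Sy : system) (f : fs Sy) (rho : rule (fs Sy)) : Prop :=
  let ls := r_args rho in
  let cs := r_conds rho in
  let bs := map snd cs in
  length ls = ar Sy f /\ Forall (wf_f Sy) ls /\ wf_f Sy (r_rhs rho) /\
  Forall (fun ab => wf_f Sy (fst ab) /\ wf_f Sy (snd ab)) cs /\
  Forall (cterm Sy) ls /\ Forall (cterm Sy) bs /\
  linear (App f ls) /\ Forall linear bs /\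
  pairwise_disjoint (vars (App f ls) :: map vars bs) /\
  incl (vars (r_rhs rho)) (vars_list ls ++ vars_list bs) /\
  (* Var(a_i) subset Var(l, b_1..b_{i-1})   (0-based index i here) *)
  (forall i a b, nth_error cs i = Some (a, b) ->
     incl (vars a) (vars_list ls ++ vars_list (firstn i bs))).

Definition strong_cctrs (Sy : system) : Prop :=
  forall f : fs Sy, NoDup (rules Sy f) /\ Forall (cctrs_rule Sy f) (rules Sy f).

(* f_R is (f, R) with R a bit vector of length m_f: bit i (0-based) says
   rho^f_{i+1} is in R.  Constructors c are (c, []) (= c_emptyset). *)
Definition gsym (Sy : system) : Type := (fs Sy * list bool)%type.
Definition gterm (Sy : system) := term (gsym Sy).

Definition wf_g (Sy : system) (t : gterm Sy) : Prop :=
  wf (fun g : gsym Sy => ar Sy (fst g)) (fun g => length (snd g) = m Sy (fst g)) t.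

Fixpoint label (Sy : system) (t : fterm Sy) : gterm Sy :=
  match t with
  | Var x => Var x
  | App f args => App (f, repeat true (m Sy f)) (map (label Sy) args)
  end.

Fixpoint erase (Sy : system) (t : gterm Sy) : fterm Sy :=
  match t with
  | Var x => Var x
  | App g args => App (fst g) (map (erase Sy) args)
  end.

Inductive lnf (Sy : system) : gterm Sy -> Prop :=
| lnf_var x : lnf Sy (Var x)
| lnf_app f R args : Forall (fun b => b = false) R -> Forall (lnf Sy) args ->
    lnf Sy (App (f, R) args).

(* R \ {rho_{i+1}} : clear bit i *)
Fixpoint clear_bit (R : list bool) (i : nat) : list bool :=
  match R, i with
  | [], _ => []
  | _ :: R', 0 => false :: R'
  | b :: R', S i' => b :: clear_bit R' i'
  end.

Definition lhs_inst (Sy : system) (f : fs Sy) (R : list bool) (rho : rule (fs Sy))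
  (sigma : nat -> gterm Sy) : gterm Sy :=
  App (f, R) (map (fun l => subst sigma (label Sy l)) (r_args rho)).

(* lstep s t c : a labeled step s -> t with cost c (with chosen witnesses);
   lsteps : -> * with total cost; lconds sigma cs costs : the conditions cs
   are satisfied, label(a_i) sigma ->* b_i sigma, with the given costs *)
Inductive lstep (Sy : system) : gterm Sy -> gterm Sy -> nat -> Prop :=
| ls_bot f R i rho us (sigma : nat -> gterm Sy) :
    nth_error (rules Sy f) i = Some rho -> nth i R false = true ->
    Forall (lnf Sy) us -> NoDup (vars_list us) ->
    disjoint (vars_list us) (vars_list (r_args rho)) ->
    ~ unifiable (App f (map (erase Sy) us)) (App f (r_args rho)) ->
    lstep Sy (App (f, R) (map (subst sigma) us))
             (App (f, clear_bit R i) (map (subst sigma) us)) 0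
| ls_succ f R i rho sigma costs :
    nth_error (rules Sy f) i = Some rho -> nth i R false = true ->
    lconds Sy sigma (r_conds rho) costs ->
    lstep Sy (lhs_inst Sy f R rho sigma) (subst sigma (label Sy (r_rhs rho)))
          (S (list_sum costs))
| ls_fail f R i rho sigma j costs a b u tau c :
    nth_error (rules Sy f) i = Some rho -> nth i R false = true ->
    lconds Sy sigma (firstn j (r_conds rho)) costs ->
    nth_error (r_conds rho) j = Some (a, b) ->
    lnf Sy u -> linear u -> disjoint (vars u) (vars b) ->
    ~ unifiable (erase Sy u) b ->
    lsteps Sy (subst sigma (label Sy a)) (subst tau u) c ->
    lstep Sy (lhs_inst Sy f R rho sigma)
             (lhs_inst Sy f (clear_bit R i) rho sigma) (list_sum costs + c)
| ls_ctx g pre a a' post c :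
    lstep Sy a a' c ->
    lstep Sy (App g (pre ++ a :: post)) (App g (pre ++ a' :: post)) c
with lsteps (Sy : system) : gterm Sy -> gterm Sy -> nat -> Prop :=
| lss_refl s : lsteps Sy s s 0
| lss_cons s u t c1 c2 : lstep Sy s u c1 -> lsteps Sy u t c2 -> lsteps Sy s t (c1 + c2)
with lconds (Sy : system) : (nat -> gterm Sy) -> list (fterm Sy * fterm Sy) -> list nat -> Prop :=
| lc_nil sigma : lconds Sy sigma [] []
| lc_cons sigma a b rest c costs :
    lsteps Sy (subst sigma (label Sy a)) (subst sigma (label Sy b)) c ->
    lconds Sy sigma rest costs ->
    lconds Sy sigma ((a, b) :: rest) (c :: costs).

(* s ->_|> t : t = label(a_{j+1}) sigma for a redex at some position of s whose
   first j conditions hold (j < k) *)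
Inductive lsub (Sy : system) : gterm Sy -> gterm Sy -> Prop :=
| lsub_here f R i rho sigma j costs a b :
    nth_error (rules Sy f) i = Some rho -> nth i R false = true ->
    lconds Sy sigma (firstn j (r_conds rho)) costs ->
    nth_error (r_conds rho) j = Some (a, b) ->
    lsub Sy (lhs_inst Sy f R rho sigma) (subst sigma (label Sy a))
| lsub_in g args a t : In a args -> lsub Sy a t -> lsub Sy (App g args) t.

Definition linf (Sy : system) (s : gterm Sy) : Prop :=
  exists u : nat -> gterm Sy, u 0 = s /\
    forall n, (exists c, lstep Sy (u n) (u (S n)) c) \/ lsub Sy (u n) (u (S n)).

Inductive hsym (F : Type) : Type :=
| HBot | HTop
| HF (f : F)                 (* f of arity n + m_f *)
| HFij (f : F) (i j : nat).  (* f_i^j of arity n + m_f + j - 1 *)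
Arguments HBot {F}. Arguments HTop {F}. Arguments HF {F} f. Arguments HFij {F} f i j.

Definition hterm (Sy : system) := term (hsym (fs Sy)).

(* replacement map mu, with 1-based argument positions *)
Definition hmu (Sy : system) (g : hsym (fs Sy)) (p : nat) : Prop :=
  match g with
  | HF f => 1 <= p <= ar Sy f
  | HFij f i j => p = ar Sy f + i + j - 1
  | _ => False
  end.

Definition star (Sy : system) (top : bool) : hterm Sy :=
  App (if top then HTop else HBot) [].

(* xi_star : top = true gives xi_top, top = false gives xi_bot *)
Fixpoint xi (Sy : system) (top : bool) (t : fterm Sy) : hterm Sy :=
  match t with
  | Var x => Var x
  | App f args => App (HF f) (map (xi Sy top) args ++ repeat (star Sy top) (m Sy f))
  end.

Fixpoint zeta (Sy : system) (t : gterm Sy) : hterm Sy :=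
  match t with
  | Var x => Var x
  | App g args => App (HF (fst g))
      (map (zeta Sy) args ++ map (fun b : bool => star Sy b) (snd g))
  end.

(* <t_1..t_n>[u_1..u_j]_i   (i is 1-based) *)
Definition repl {A : Type} (ts : list A) (i : nat) (us : list A) : list A :=
  firstn (i - 1) ts ++ us ++ skipn i ts.

(* ap t u : u in AP(t) (variables arbitrary; freshness/distinctness is imposed
   by requiring linear left-hand sides in xi_rule) *)
Inductive ap (Sy : system) : fterm Sy -> hterm Sy -> Prop :=
| ap_con f ts g xs : m Sy g = 0 -> g <> f -> length xs = ar Sy g ->
    ap Sy (App f ts) (App (HF g) (map Var xs))
| ap_def f ts g xs : 0 < m Sy g -> length xs = ar Sy g ->
    ap Sy (App f ts) (App (HF g) (map Var xs ++ repeat (star Sy false) (m Sy g)))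
| ap_arg f ts k u xs : k < length ts -> length xs = length ts ->
    ap Sy (nth k ts (Var 0)) u ->
    ap Sy (App f ts) (App (HF f) (firstn k (map Var xs) ++ u :: skipn (S k) (map Var xs))).

(* the rules of Xi(R), tagged with their cost (1 for types (1),(3), else 0);
   i is the 1-based index of rho = rho^f_i, xs are x_1..x_{m_f}, ys are y_1..y_n *)
Inductive xi_raw (Sy : system) : hterm Sy -> hterm Sy -> nat -> Prop :=
| xi_1 f i rho xs :
    1 <= i <= m Sy f -> nth_error (rules Sy f) (i - 1) = Some rho ->
    length xs = m Sy f -> r_conds rho = [] ->
    xi_raw Sy (App (HF f) (map (xi Sy true) (r_args rho) ++ repl (map Var xs) i [star Sy true]))
              (xi Sy true (r_rhs rho)) 1
| xi_2 f i rho xs a1 b1 rest :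
    1 <= i <= m Sy f -> nth_error (rules Sy f) (i - 1) = Some rho ->
    length xs = m Sy f -> r_conds rho = (a1, b1) :: rest ->
    xi_raw Sy (App (HF f) (map (xi Sy true) (r_args rho) ++ repl (map Var xs) i [star Sy true]))
              (App (HFij f i 1) (map (xi Sy true) (r_args rho) ++
                                 repl (map Var xs) i [xi Sy true a1])) 0
| xi_3 f i rho xs :
    1 <= i <= m Sy f -> nth_error (rules Sy f) (i - 1) = Some rho ->
    length xs = m Sy f -> r_conds rho <> [] ->
    xi_raw Sy (App (HFij f i (length (r_conds rho)))
                   (map (xi Sy true) (r_args rho) ++
                    repl (map Var xs) i (map (xi Sy true) (map snd (r_conds rho)))))
              (xi Sy true (r_rhs rho)) 1
| xi_4 f i rho xs j a b :
    1 <= i <= m Sy f -> nth_error (rules Sy f) (i - 1) = Some rho ->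
    length xs = m Sy f -> 1 <= j < length (r_conds rho) ->
    nth_error (r_conds rho) j = Some (a, b) ->   (* (a,b) = (a_{j+1}, b_{j+1}) *)
    xi_raw Sy (App (HFij f i j)
                   (map (xi Sy true) (r_args rho) ++
                    repl (map Var xs) i (map (xi Sy true) (firstn j (map snd (r_conds rho))))))
              (App (HFij f i (S j))
                   (map (xi Sy true) (r_args rho) ++
                    repl (map Var xs) i (map (xi Sy true) (firstn j (map snd (r_conds rho)))
                                         ++ [xi Sy true a]))) 0
| xi_5 f i rho xs j a b v :
    1 <= i <= m Sy f -> nth_error (rules Sy f) (i - 1) = Some rho ->
    length xs = m Sy f -> 1 <= j <= length (r_conds rho) ->
    nth_error (r_conds rho) (j - 1) = Some (a, b) ->   (* (a,b) = (a_j, b_j) *)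
    ap Sy b v ->
    xi_raw Sy (App (HFij f i j)
                   (map (xi Sy true) (r_args rho) ++
                    repl (map Var xs) i (map (xi Sy true) (firstn (j - 1) (map snd (r_conds rho)))
                                         ++ [v])))
              (App (HF f) (map (xi Sy true) (r_args rho) ++ repl (map Var xs) i [star Sy false])) 0
| xi_6 f i rho xs ys j l v :
    1 <= i <= m Sy f -> nth_error (rules Sy f) (i - 1) = Some rho ->
    length xs = m Sy f -> length ys = ar Sy f -> 1 <= j <= ar Sy f ->
    nth_error (r_args rho) (j - 1) = Some l -> ap Sy l v ->
    xi_raw Sy (App (HF f) (repl (map Var ys) j [v] ++ repl (map Var xs) i [star Sy true]))
              (App (HF f) (repl (map Var ys) j [v] ++ repl (map Var xs) i [star Sy false])) 0.

(* the fresh variables of the construction are distinct and fresh exactly when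
   the left-hand side is linear *)
Definition xi_rule (Sy : system) (l r : hterm Sy) (c : nat) : Prop :=
  linear l /\ xi_raw Sy l r c.

Inductive cs_step (Sy : system) : hterm Sy -> hterm Sy -> nat -> Prop :=
| cs_root l r c (sigma : nat -> hterm Sy) :
    xi_rule Sy l r c -> cs_step Sy (subst sigma l) (subst sigma r) c
| cs_ctx g pre a a' post c :
    hmu Sy g (S (length pre)) -> cs_step Sy a a' c ->
    cs_step Sy (App g (pre ++ a :: post)) (App g (pre ++ a' :: post)) c.

Inductive cs_steps (Sy : system) : hterm Sy -> hterm Sy -> nat -> Prop :=
| css_refl s : cs_steps Sy s s 0
| css_cons s u t c1 c2 : cs_step Sy s u c1 -> cs_steps Sy u t c2 -> cs_steps Sy s t (c1 + c2).

(* [zeta] turns a labeled term into a term of Xi(R) whose extra arguments record, with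
   [top]/[bot], which rules may still be tried.  A successful labeled step at a redex
   f_R(l sigma) is replayed by rule (2), then, for every condition, the simulated condition
   reduction inside the unique active argument of f_i^j followed by rule (4) (resp. (3)
   after the last one).  A failed step is replayed up to the failing condition: its result
   is a linear normal form that does not unify with the constructor term b_{j+1}, hence is
   an instance of an anti-pattern of b_{j+1}, and rule (5) fires; a bot-step is rule (6)
   for the same reason.  Only rules (1) and (3) have cost, exactly as successful steps do.
   Every labeled step and every step into a condition thus becomes a non-empty reduction
   inside an active context, so an infinite labeled sequence yields, by dependent choice,
   an infinite context-sensitive reduction. *)

From Stdlib Require Import List Arith Lia Classical ClassicalEpsilon.
Import ListNotations.

(** * Terms and substitutions *)

Section TermInd.
Variable S : Type.
Variable P : term S -> Prop.
Hypothesis P_Var : forall x, P (Var x).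
Hypothesis P_App : forall g args, Forall P args -> P (App g args).

Fixpoint term_nested_ind (t : term S) : P t :=
  match t with
  | Var x => P_Var x
  | App g args => P_App g args
      ((fix go (l : list (term S)) : Forall P l :=
          match l with
          | [] => Forall_nil _
          | a :: l' => Forall_cons _ (term_nested_ind a) (go l')
          end) args)
  end.
End TermInd.

Lemma vars_App {S} (g : S) args : vars (App g args) = flat_map vars args.
Proof. reflexivity. Qed.

Lemma subst_ext_in {S} (s1 s2 : nat -> term S) t :
  (forall x, In x (vars t) -> s1 x = s2 x) -> subst s1 t = subst s2 t.
Proof.
  induction t as [x|g args IH] using term_nested_ind; simpl; intros H.
  - apply H; auto.
  - f_equal. induction IH; simpl in *; auto.
    f_equal; [apply H0|apply IHIH]; intros; apply H; apply in_or_app; auto.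
Qed.

Lemma subst_id_in {S} (s : nat -> term S) t :
  (forall x, In x (vars t) -> s x = Var x) -> subst s t = t.
Proof.
  intros H. transitivity (subst (@Var S) t); [now apply subst_ext_in|]. clear H.
  induction t as [x|g args IH] using term_nested_ind; simpl; auto.
  f_equal. induction IH; simpl; f_equal; auto.
Qed.

Lemma subst_comp {S} (s1 s2 : nat -> term S) t :
  subst s2 (subst s1 t) = subst (fun x => subst s2 (s1 x)) t.
Proof.
  induction t as [x|g args IH] using term_nested_ind; simpl; auto.
  f_equal. rewrite map_map. induction IH; simpl; f_equal; auto.
Qed.

Lemma flat_map_vars_Var {S} (l : list nat) : flat_map (@vars S) (map Var l) = l.
Proof. induction l; simpl; f_equal; auto. Qed.

Lemma vars_list_app {S} (l1 l2 : list (term S)) :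
  vars_list (l1 ++ l2) = vars_list l1 ++ vars_list l2.
Proof. apply flat_map_app. Qed.

Lemma in_vars_list {S} (l : list (term S)) t x : In t l -> In x (vars t) -> In x (vars_list l).
Proof. intros. apply in_flat_map. eauto. Qed.

Lemma NoDup_vars_list_elem {S} (l : list (term S)) t :
  NoDup (vars_list l) -> In t l -> NoDup (vars t).
Proof.
  induction l as [|u l IH]; simpl; [intros _ []|]. unfold vars_list; simpl.
  intros H [<-|Hi]; apply NoDup_app_remove_r in H as ?; apply NoDup_app_remove_l in H as ?; auto.
Qed.

Lemma vars_erase (Sy : system) t : vars (erase Sy t) = vars t.
Proof.
  induction t as [x|g args IH] using term_nested_ind; simpl; auto.
  induction IH; simpl; auto. rewrite H, IHIH; auto.
Qed.

Lemma vars_label (Sy : system) t : vars (label Sy t) = vars t.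
Proof.
  induction t as [x|g args IH] using term_nested_ind; auto.
  cbn [label]. rewrite !vars_App. induction IH; simpl; auto. rewrite H. f_equal; auto.
Qed.

Lemma flat_map_vars_repeat_star (Sy : system) b n :
  flat_map vars (repeat (star Sy b) n) = [].
Proof. induction n; simpl; auto. Qed.

Lemma vars_xi (Sy : system) b t : vars (xi Sy b t) = vars t.
Proof.
  induction t as [x|g args IH] using term_nested_ind; auto.
  cbn [xi]. rewrite !vars_App, flat_map_app.
  transitivity (flat_map vars (map (xi Sy b) args) ++ []).
  { f_equal. apply flat_map_vars_repeat_star. }
  rewrite app_nil_r. induction IH; simpl; auto. rewrite H. f_equal; auto.
Qed.

Lemma vars_list_map_xi (Sy : system) b L : vars_list (map (xi Sy b) L) = vars_list L.
Proof. induction L; simpl; auto. unfold vars_list in *; simpl. rewrite vars_xi. f_equal; auto. Qed.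

Lemma zeta_subst (Sy : system) s t :
  zeta Sy (subst s t) = subst (fun x => zeta Sy (s x)) (zeta Sy t).
Proof.
  induction t as [x|g args IH] using term_nested_ind; simpl; auto.
  f_equal. rewrite map_app, !map_map. f_equal.
  induction IH; simpl; f_equal; auto.
Qed.

Lemma map_star_repeat (Sy : system) b n :
  map (fun b0 : bool => star Sy b0) (repeat b n) = repeat (star Sy b) n.
Proof. induction n; simpl; f_equal; auto. Qed.

Lemma zeta_label (Sy : system) t : zeta Sy (label Sy t) = xi Sy true t.
Proof.
  induction t as [x|g args IH] using term_nested_ind; simpl; auto.
  f_equal. rewrite map_map, map_star_repeat. f_equal.
  induction IH; simpl; f_equal; auto.
Qed.

Lemma zeta_ctx (Sy : system) (g : gsym Sy) pre a post :
  zeta Sy (App g (pre ++ a :: post)) =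
  App (HF (fst g)) (map (zeta Sy) pre ++ zeta Sy a :: (map (zeta Sy) post ++ map (star Sy) (snd g))).
Proof. cbn [zeta]. rewrite map_app. cbn [map]. rewrite <- app_assoc. reflexivity. Qed.

Lemma wf_App_inv {S} arS valid (g : S) args :
  wf arS valid (App g args) -> valid g /\ length args = arS g /\ Forall (wf arS valid) args.
Proof. intros H; inversion H; auto. Qed.

Lemma wf_subst {S} arS valid (s : nat -> term S) t :
  wf arS valid t -> (forall x, In x (vars t) -> wf arS valid (s x)) ->
  wf arS valid (subst s t).
Proof.
  induction t as [x|g args IH] using term_nested_ind; simpl; intros Hw H.
  - apply H; auto.
  - apply wf_App_inv in Hw as (Hv & Hl & Hargs). constructor; auto. rewrite length_map; auto.
    clear Hl. induction IH; simpl in *; inversion Hargs; subst; constructor.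
    + apply H0; auto. intros; apply H; apply in_or_app; auto.
    + apply IHIH; auto. intros; apply H; apply in_or_app; auto.
Qed.

Lemma wf_subst_inv {S} arS valid (s : nat -> term S) t :
  wf arS valid (subst s t) ->
  wf arS valid t /\ (forall x, In x (vars t) -> wf arS valid (s x)).
Proof.
  induction t as [x|g args IH] using term_nested_ind; simpl; intros Hw.
  - split; [constructor|]. intros y [<-|[]]; auto.
  - apply wf_App_inv in Hw as (Hv & Hl & Hf). rewrite length_map in Hl.
    assert (Forall (wf arS valid) args /\
      (forall x, In x (flat_map vars args) -> wf arS valid (s x))) as [A B].
    { clear Hl. induction IH as [|a l Ha IHl IHIH]; simpl in *; [split; auto; intros _ []|].
      inversion Hf as [|? ? Hf1 Hf2]; subst. destruct (Ha Hf1), (IHIH Hf2).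
      split; [constructor; auto|]. intros y Hy; apply in_app_or in Hy as [|]; auto. }
    split; auto. constructor; auto.
Qed.

Lemma wf_label (Sy : system) t : wf_f Sy t -> wf_g Sy (label Sy t).
Proof.
  unfold wf_f, wf_g.
  induction t as [x|g args IH] using term_nested_ind; simpl; intros Hw; [constructor|].
  apply wf_App_inv in Hw as (_ & Hl & Hargs). constructor; simpl.
  - apply repeat_length.
  - rewrite length_map; auto.
  - clear Hl. induction IH; simpl; inversion Hargs; subst; constructor; auto.
Qed.

Lemma wf_label_inst (Sy : system) (sigma : nat -> gterm Sy) t V :
  wf_f Sy t -> incl (vars t) V -> (forall x, In x V -> wf_g Sy (sigma x)) ->
  wf_g Sy (subst sigma (label Sy t)).
Proof.
  intros Ht HV Hs. apply wf_subst; [now apply wf_label|].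
  intros x Hx. rewrite vars_label in Hx. apply Hs, HV, Hx.
Qed.

Lemma wf_ctx_inv (Sy : system) (g : gsym Sy) pre a post :
  wf_g Sy (App g (pre ++ a :: post)) -> wf_g Sy a /\
  (forall a', wf_g Sy a' -> wf_g Sy (App g (pre ++ a' :: post))) /\ S (length pre) <= ar Sy (fst g).
Proof.
  intros H. apply wf_App_inv in H as (H1 & H2 & H3).
  rewrite length_app in H2. simpl in H2.
  apply Forall_app in H3 as [H3 H4]. inversion H4; subst.
  repeat split; auto; try lia.
  intros a' Ha'. constructor; auto.
  - rewrite length_app. simpl. lia.
  - apply Forall_app; split; auto.
Qed.

Lemma length_clear_bit R i : length (clear_bit R i) = length R.
Proof. revert i; induction R; intros [|i]; simpl; auto. Qed.

Lemma wf_clear_bit (Sy : system) f R i args :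
  wf_g Sy (App (f, R) args) -> wf_g Sy (App (f, clear_bit R i) args).
Proof.
  intros H. apply wf_App_inv in H as (H1 & H2 & H3). constructor; auto. simpl in *.
  rewrite length_clear_bit; auto.
Qed.

Lemma in_firstn {A} k (l : list A) x : In x (firstn k l) -> In x l.
Proof. intros H; rewrite <- (firstn_skipn k l); apply in_or_app; auto. Qed.

Lemma Forall_firstn {A} (P : A -> Prop) l j : Forall P l -> Forall P (firstn j l).
Proof. rewrite !Forall_forall. intros H x Hx. apply H. eapply in_firstn; eauto. Qed.

Lemma firstn_S_nth_error {A} (l : list A) q x :
  nth_error l q = Some x -> firstn (S q) l = firstn q l ++ [x].
Proof.
  revert q; induction l; intros [|q] H; simpl in *; try discriminate.
  - now inversion H.
  - f_equal. auto.
Qed.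

Lemma firstn_length_app {A} (l l' : list A) : firstn (length l) (l ++ l') = l.
Proof. rewrite <- (Nat.add_0_r (length l)), firstn_app_2. apply app_nil_r. Qed.

Lemma firstn_seq k a n : firstn k (seq a n) = seq a (min k n).
Proof. revert a n; induction k; intros a [|n]; simpl; auto. f_equal; auto. Qed.

Lemma in_firstn_seq k a n x : In x (firstn k (seq a n)) -> a <= x < a + k.
Proof. rewrite firstn_seq. intros H; apply in_seq in H; lia. Qed.

Lemma in_skipn_seq k a n x : In x (skipn k (seq a n)) -> a + k <= x < a + n.
Proof. rewrite skipn_seq. intros H; apply in_seq in H; lia. Qed.

Lemma NoDup_app_inv {A} (a b : list A) :
  NoDup (a ++ b) -> NoDup a /\ NoDup b /\ (forall x, In x a -> ~ In x b).
Proof.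
  induction a; simpl; intros H.
  - repeat split; auto. constructor.
  - inversion H as [|? ? Hn Hd]; subst. destruct (IHa Hd) as (K1 & K2 & K4).
    repeat split; auto.
    + constructor; auto. intros Hi; apply Hn; apply in_or_app; auto.
    + intros x [<-|Hx] Hb; [apply Hn; apply in_or_app; auto | eapply K4; eauto].
Qed.

Definition seq_hole (N M i : nat) (P : list nat) : list nat :=
  firstn i (seq N M) ++ P ++ skipn (S i) (seq N M).

Lemma in_seq_hole N M i P x : In x (seq_hole N M i P) -> N <= x < N + M \/ In x P.
Proof.
  unfold seq_hole. intros H. apply in_app_or in H as [H|H]; [apply in_firstn, in_seq in H; left; lia|].
  apply in_app_or in H as [H|H]; [auto|apply in_skipn_seq in H; left; lia].
Qed.

Lemma NoDup_seq_hole N M i P : NoDup P -> (forall x, In x P -> ~ N <= x < N + M) ->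
  NoDup (seq_hole N M i P).
Proof.
  intros HP Hout. unfold seq_hole. apply NoDup_app; [rewrite firstn_seq; apply seq_NoDup| |].
  - apply NoDup_app; [auto|rewrite skipn_seq; apply seq_NoDup|].
    intros x Hx1 Hx2. apply (Hout x Hx1). apply in_skipn_seq in Hx2. lia.
  - intros x Hx1 Hx2. pose proof (in_firstn_seq _ _ _ _ Hx1).
    apply in_firstn, in_seq in Hx1. apply in_app_or in Hx2 as [Hx|Hx].
    + apply (Hout x Hx). lia.
    + apply in_skipn_seq in Hx. lia.
Qed.

Lemma list_max_in l x : In x l -> x <= list_max l.
Proof.
  intros H. pose proof (proj1 (list_max_le l (list_max l)) (le_n _)) as F.
  rewrite Forall_forall in F. auto.
Qed.

Lemma repl_S {A} (L : list A) i M : repl L (S i) M = firstn i L ++ M ++ skipn (S i) L.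
Proof. unfold repl. now rewrite Nat.sub_succ, Nat.sub_0_r. Qed.

Lemma map_repl {A B} (f : A -> B) L i M : map f (repl L i M) = repl (map f L) i (map f M).
Proof. unfold repl. now rewrite !map_app, firstn_map, skipn_map. Qed.

Lemma repl_nth_same {A} (L : list A) i d : i < length L -> repl L (S i) [nth i L d] = L.
Proof. intros H. rewrite repl_S. simpl. apply firstn_skipn_middle, nth_error_nth', H. Qed.

Lemma vars_repl_Var {F} (xs : list nat) i (Ms : list (term F)) :
  flat_map vars (repl (map Var xs) (S i) Ms) = firstn i xs ++ flat_map vars Ms ++ skipn (S i) xs.
Proof. rewrite repl_S, !flat_map_app, firstn_map, skipn_map, !flat_map_vars_Var. reflexivity. Qed.

Lemma map_seq_nth {A B} (f : nat -> B) (g : A -> B) (L : list A) K d :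
  (forall x, K <= x < K + length L -> f x = g (nth (x - K) L d)) ->
  map f (seq K (length L)) = map g L.
Proof.
  revert K; induction L; intros K H; simpl; auto.
  f_equal.
  - rewrite H by (simpl; lia). now rewrite Nat.sub_diag.
  - apply IHL. intros x Hx. rewrite H by (simpl; lia).
    replace (x - K) with (S (x - S K)) by lia. reflexivity.
Qed.

(** * Context-sensitive reduction *)

Lemma cs_steps_trans (Sy : system) a b c c1 c2 :
  cs_steps Sy a b c1 -> cs_steps Sy b c c2 -> cs_steps Sy a c (c1 + c2).
Proof.
  induction 1; intros; simpl; auto.
  rewrite <- Nat.add_assoc. econstructor; eauto.
Qed.

Lemma cs_steps_one (Sy : system) a b c : cs_step Sy a b c -> cs_steps Sy a b c.
Proof. intros H. rewrite <- (Nat.add_0_r c). econstructor; eauto. constructor. Qed.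

Lemma cs_step_rule (Sy : system) l r c (theta : nat -> hterm Sy) X Y :
  xi_rule Sy l r c -> subst theta l = X -> subst theta r = Y -> cs_step Sy X Y c.
Proof. intros H <- <-. constructor; auto. Qed.

(* Non-emptiness is what keeps the reduction built for an infinite labeled sequence infinite. *)
Definition cs_plus (Sy : system) s t c := exists u c1 c2,
  cs_step Sy s u c1 /\ cs_steps Sy u t c2 /\ c = c1 + c2.

Lemma cs_plus_steps (Sy : system) s t c : cs_plus Sy s t c -> cs_steps Sy s t c.
Proof. intros (u & c1 & c2 & H1 & H2 & ->). econstructor; eauto. Qed.

Lemma cs_plus_intro (Sy : system) a b c c1 c2 :
  cs_step Sy a b c1 -> cs_steps Sy b c c2 -> cs_plus Sy a c (c1 + c2).
Proof. intros. exists b, c1, c2; auto. Qed.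

Lemma cs_plus_trans_steps (Sy : system) a b c c1 c2 :
  cs_plus Sy a b c1 -> cs_steps Sy b c c2 -> cs_plus Sy a c (c1 + c2).
Proof.
  intros (u & d1 & d2 & H1 & H2 & ->) H3. exists u, d1, (d2 + c2).
  repeat split; auto; [eapply cs_steps_trans; eauto|lia].
Qed.

Definition active_ctx (Sy : system) (C : hterm Sy -> hterm Sy) : Prop :=
  forall a b c, cs_step Sy a b c -> cs_step Sy (C a) (C b) c.

Lemma active_ctx_id (Sy : system) : active_ctx Sy (fun x => x).
Proof. intros a b c H; auto. Qed.

Lemma active_ctx_comp (Sy : system) C D :
  active_ctx Sy C -> active_ctx Sy D -> active_ctx Sy (fun x => C (D x)).
Proof. intros H1 H2 a b c H; auto. Qed.

Lemma active_ctx_steps (Sy : system) C a b c :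
  active_ctx Sy C -> cs_steps Sy a b c -> cs_steps Sy (C a) (C b) c.
Proof. intros HC; induction 1; econstructor; eauto. Qed.

Lemma active_ctx_plus (Sy : system) C a b c :
  active_ctx Sy C -> cs_plus Sy a b c -> cs_plus Sy (C a) (C b) c.
Proof.
  intros HC (u & c1 & c2 & H1 & H2 & ->). exists (C u), c1, c2.
  repeat split; auto. apply active_ctx_steps; auto.
Qed.

Lemma active_ctx_zeta (Sy : system) (g : gsym Sy) pre post :
  S (length pre) <= ar Sy (fst g) ->
  active_ctx Sy (fun x => App (HF (fst g))
    (map (zeta Sy) pre ++ x :: (map (zeta Sy) post ++ map (star Sy) (snd g)))).
Proof. intros H a b c Hs. apply cs_ctx; auto. simpl. rewrite length_map. lia. Qed.

(** * Anti-patterns *)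

(* [zeta t] is an instance of a linear pattern of AP(b) whose variables avoid any
   prescribed bound, so that it can be placed next to the other fresh variables of a
   left-hand side of Xi(R). *)
Definition ap_instance (Sy : system) (b : fterm Sy) (t : hterm Sy) : Prop :=
  forall K, exists v (psi : nat -> hterm Sy), ap Sy b v /\
    (forall x, In x (vars v) -> K <= x) /\ NoDup (vars v) /\ subst psi v = t.

Definition ap_complete (Sy : system) (b : fterm Sy) : Prop :=
  forall u, lnf Sy u -> wf_g Sy u -> NoDup (vars u) -> disjoint (vars u) (vars b) ->
    ap_instance Sy b (zeta Sy u) \/ unifiable (erase Sy u) b.

Definition seq_subst (Sy : system) K (us : list (gterm Sy)) (psi : nat -> hterm Sy) (x : nat) :=
  if x <? K + length us then zeta Sy (nth (x - K) us (Var 0)) else psi x.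

Lemma map_seq_subst (Sy : system) K us psi :
  map (subst (seq_subst Sy K us psi)) (map Var (seq K (length us))) = map (zeta Sy) us.
Proof.
  rewrite map_map. apply map_seq_nth with (d := Var 0). intros x Hx. simpl.
  unfold seq_subst, gterm in *. destruct (Nat.ltb_spec x (K + length us)); [reflexivity|lia].
Qed.

Lemma nth_map_zeta (Sy : system) us k :
  nth k (map (zeta Sy) us) (Var 0) = zeta Sy (nth k us (Var 0)).
Proof. revert k; induction us; intros [|k]; simpl; auto. Qed.

Lemma map_star_false (Sy : system) R : Forall (fun b => b = false) R ->
  map (fun b : bool => star Sy b) R = repeat (star Sy false) (length R).
Proof. induction 1; simpl; subst; f_equal; auto. Qed.

Lemma ap_instance_con (Sy : system) f ts g us :
  m Sy g = 0 -> g <> f -> length us = ar Sy g ->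
  ap_instance Sy (App f ts) (zeta Sy (App (g, []) us)).
Proof.
  intros Hg Hne Hl K. exists (App (HF g) (map Var (seq K (length us)))), (seq_subst Sy K us Var).
  rewrite vars_App, flat_map_vars_Var. repeat split.
  - apply ap_con; auto. rewrite length_seq; auto.
  - intros x Hx; apply in_seq in Hx; lia.
  - apply seq_NoDup.
  - cbn [subst zeta map fst snd]. rewrite app_nil_r, map_seq_subst. reflexivity.
Qed.

Lemma ap_instance_def (Sy : system) f ts g R us :
  0 < m Sy g -> Forall (fun b => b = false) R -> length R = m Sy g -> length us = ar Sy g ->
  ap_instance Sy (App f ts) (zeta Sy (App (g, R) us)).
Proof.
  intros Hg HR HlR Hl K.
  exists (App (HF g) (map Var (seq K (length us)) ++ repeat (star Sy false) (m Sy g))).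
  exists (seq_subst Sy K us Var).
  rewrite vars_App, flat_map_app, flat_map_vars_Var.
  rewrite (flat_map_vars_repeat_star Sy false (m Sy g)), app_nil_r. repeat split.
  - apply ap_def; auto. rewrite length_seq; auto.
  - intros x Hx; apply in_seq in Hx; lia.
  - apply seq_NoDup.
  - cbn [subst zeta fst snd]. rewrite map_app, map_seq_subst, map_star_false, HlR by auto.
    f_equal. f_equal. clear. induction (m Sy g); simpl; f_equal; auto.
Qed.

Lemma ap_instance_arg (Sy : system) f ts us k :
  length ts = length us -> k < length ts ->
  ap_instance Sy (nth k ts (Var 0)) (zeta Sy (nth k us (Var 0))) ->
  ap_instance Sy (App f ts) (zeta Sy (App (f, []) us)).
Proof.
  intros Hl Hk HA K. set (n := length ts).
  destruct (HA (K + n)) as (v & psi & Hap & Hv1 & Hv2 & Hv3).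
  exists (App (HF f) (firstn k (map Var (seq K n)) ++ v :: skipn (S k) (map Var (seq K n)))).
  exists (seq_subst Sy K us psi).
  assert (Hvars : vars (App (HF f) (firstn k (map Var (seq K n)) ++ v :: skipn (S k) (map Var (seq K n))))
                  = seq_hole K n k (vars v)).
  { rewrite vars_App, flat_map_app. cbn [flat_map].
    rewrite firstn_map, skipn_map, !flat_map_vars_Var. reflexivity. }
  rewrite Hvars. repeat split.
  - apply ap_arg; auto. apply length_seq.
  - intros x Hx. apply in_seq_hole in Hx as [Hx|Hx]; [lia|apply Hv1 in Hx; lia].
  - apply NoDup_seq_hole; auto. intros x Hx. apply Hv1 in Hx. lia.
  - cbn [subst zeta fst snd map]. rewrite app_nil_r. f_equal.
    rewrite map_app. cbn [map]. unfold n. rewrite Hl, <- firstn_map, <- skipn_map, map_seq_subst.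
    rewrite (subst_ext_in _ psi), Hv3, <- nth_map_zeta.
    + apply firstn_skipn_middle, nth_error_nth'. rewrite length_map. unfold gterm in *. lia.
    + intros x Hx. apply Hv1 in Hx. unfold seq_subst, gterm in *.
      destruct (Nat.ltb_spec x (K + length us)); [lia|reflexivity].
Qed.

(* Either some argument clashes, or the argument-wise unifiers, having disjoint domains,
   glue to a unifier of the whole lists. *)
Lemma ap_complete_args (Sy : system) (bs : list (fterm Sy)) (us : list (gterm Sy)) :
  Forall (ap_complete Sy) bs -> length bs = length us -> Forall (lnf Sy) us ->
  Forall (wf_g Sy) us -> NoDup (vars_list us) -> NoDup (vars_list bs) ->
  disjoint (vars_list us) (vars_list bs) ->
  (exists k, k < length bs /\ ap_instance Sy (nth k bs (Var 0)) (zeta Sy (nth k us (Var 0)))) \/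
  exists theta, map (subst theta) (map (erase Sy) us) = map (subst theta) bs.
Proof.
  revert us; induction bs as [|b bs IH]; intros [|u us] HC Hl Hln Hw Hnu Hnb Hd;
    simpl in *; try lia.
  { right. exists Var. reflexivity. }
  inversion HC as [|? ? HCb HCbs]; subst. inversion Hln; subst. inversion Hw; subst.
  unfold vars_list in Hnu, Hnb, Hd; simpl in Hnu, Hnb, Hd.
  apply NoDup_app_inv in Hnu as (Hnu1 & Hnu2 & Hnu3).
  apply NoDup_app_inv in Hnb as (Hnb1 & Hnb2 & Hnb3).
  destruct (HCb u) as [HA|[th1 Hth1]]; auto.
  { intros x Hx1 Hx2. apply (Hd x); apply in_or_app; auto. }
  { left. exists 0. split; [lia|auto]. }
  destruct (IH us) as [[k [Hk HA]]|[th2 Hth2]]; auto.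
  { intros x Hx1 Hx2. apply (Hd x); apply in_or_app; auto. }
  { left. exists (S k). split; [lia|auto]. }
  right. exists (fun x => if in_dec Nat.eq_dec x (vars u ++ vars b) then th1 x else th2 x).
  simpl. f_equal.
  - rewrite (subst_ext_in _ th1), (subst_ext_in _ th1 b); auto.
    + intros x Hx. destruct in_dec as [_|n]; auto. exfalso; apply n; apply in_or_app; auto.
    + intros x Hx. rewrite vars_erase in Hx.
      destruct in_dec as [_|n]; auto. exfalso; apply n; apply in_or_app; auto.
  - rewrite (map_ext_in _ (subst th2)), (map_ext_in _ (subst th2) bs); auto.
    + intros t Ht. apply subst_ext_in. intros x Hx.
      destruct in_dec as [Hi|]; auto. exfalso.
      assert (Hx' : In x (vars_list bs)) by (eapply in_vars_list; eauto).
      apply in_app_or in Hi as [Hi|Hi]; [apply (Hd x); apply in_or_app; auto|apply (Hnb3 x); auto].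
    + intros t Ht. apply subst_ext_in. intros x Hx.
      destruct in_dec as [Hi|]; auto. exfalso.
      apply in_map_iff in Ht as (u' & <- & Hu'). rewrite vars_erase in Hx.
      assert (Hx' : In x (vars_list us)) by (eapply in_vars_list; eauto).
      apply in_app_or in Hi as [Hi|Hi]; [apply (Hnu3 x); auto|apply (Hd x); apply in_or_app; auto].
Qed.

Lemma ap_complete_cterm (Sy : system) (b : fterm Sy) :
  cterm Sy b -> wf_f Sy b -> NoDup (vars b) -> ap_complete Sy b.
Proof.
  induction b as [y|c ts IH] using term_nested_ind; intros Hc Hwb Hnb u Hlu Hwu Hnu Hd.
  - right. exists (fun z => if Nat.eqb z y then erase Sy u else Var z). simpl.
    rewrite Nat.eqb_refl. apply subst_id_in. intros x Hx. rewrite vars_erase in Hx.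
    destruct (Nat.eqb_spec x y); auto. subst. exfalso; apply (Hd y); simpl; auto.
  - inversion Hc as [|? ? Hmc Hcts]; subst. apply wf_App_inv in Hwb as (_ & Hlts & Hwts).
    destruct u as [y|[c' R] us].
    { right. exists (fun z => if Nat.eqb z y then App c ts else Var z).
      change (subst (fun z => if Nat.eqb z y then App c ts else Var z) (Var y) =
              subst (fun z => if Nat.eqb z y then App c ts else Var z) (App c ts)).
      rewrite (subst_id_in _ (App c ts)); [simpl; now rewrite Nat.eqb_refl|]. intros x Hx.
      destruct (Nat.eqb_spec x y); auto. subst. exfalso; apply (Hd y); simpl; auto. }
    inversion Hlu as [|? ? ? HR Hlus]; subst.
    apply wf_App_inv in Hwu as (HlR & Hlus' & Hwus). simpl in HlR, Hlus'.
    destruct (Nat.eq_dec (m Sy c') 0) as [H0|H0].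
    2: { left. apply ap_instance_def; auto. lia. }
    destruct R; [|simpl in HlR; lia].
    destruct (classic (c' = c)) as [->|Hne].
    2: { left. apply ap_instance_con; auto. }
    assert (HCts : Forall (ap_complete Sy) ts).
    { rewrite Forall_forall in *. intros t Ht.
      apply IH; auto; [apply Hwts; auto|eapply NoDup_vars_list_elem; eauto]. }
    destruct (ap_complete_args Sy ts us) as [[k [Hk HA]]|[th Hth]]; auto.
    { transitivity (ar Sy c); [exact Hlts|symmetry; exact Hlus']. }
    + left. eapply ap_instance_arg; eauto. lia.
    + right. exists th. simpl. rewrite Hth. reflexivity.
Qed.

(** * Conditional rules *)

Lemma rule_of_strong (Sy : system) f i rho : strong_cctrs Sy ->
  nth_error (rules Sy f) i = Some rho -> cctrs_rule Sy f rho.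
Proof.
  intros HR Hi. destruct (HR f) as [_ H]. rewrite Forall_forall in H. apply H.
  eapply nth_error_In; eauto.
Qed.

Lemma NoDup_concat_pairwise_disjoint (ls : list (list nat)) :
  pairwise_disjoint ls -> Forall (@NoDup nat) ls -> NoDup (concat ls).
Proof.
  induction ls as [|l ls IH]; simpl; intros Hp Hn; [constructor|].
  inversion Hn; subst. apply NoDup_app; auto.
  - apply IH; auto. intros i j Hi Hj Hij. apply (Hp (S i) (S j)); simpl; lia.
  - intros x Hx Hx2. apply in_concat in Hx2 as (l' & Hl' & Hx').
    apply In_nth with (d := []) in Hl' as (j & Hj & <-).
    apply (Hp 0 (S j)) in Hx; simpl; auto; lia.
Qed.

Lemma cctrs_rule_NoDup (Sy : system) f rho : cctrs_rule Sy f rho ->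
  NoDup (vars_list (r_args rho) ++ vars_list (map snd (r_conds rho))).
Proof.
  intros (_ & _ & _ & _ & _ & _ & Hlin & Hlb & Hpd & _).
  pose proof (NoDup_concat_pairwise_disjoint _ Hpd) as H. simpl in H.
  unfold vars_list. rewrite (flat_map_concat_map vars (map snd _)). apply H.
  constructor; auto. apply Forall_map. auto.
Qed.

(* The variable condition of a CCTRS in the form consumed one condition at a time:
   [a_1] only uses variables of [V], and the remaining conditions may also use [b_1]. *)
Fixpoint cond_vars_ok {F} (V : list nat) (cs : list (term F * term F)) : Prop :=
  match cs with
  | [] => True
  | (a, b) :: r => incl (vars a) V /\ cond_vars_ok (V ++ vars b) r
  end.

Lemma cond_vars_ok_intro {F} (cs : list (term F * term F)) : forall V,
  (forall i a b, nth_error cs i = Some (a, b) ->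
     incl (vars a) (V ++ vars_list (firstn i (map snd cs)))) ->
  cond_vars_ok V cs.
Proof.
  induction cs as [|[a b] cs IH]; intros V H; simpl; auto. split.
  - specialize (H 0 a b eq_refl). simpl in H. rewrite app_nil_r in H; auto.
  - apply IH. intros i a' b' Hi. specialize (H (S i) a' b' Hi). simpl in H.
    unfold vars_list in *. simpl in H. rewrite app_assoc in H. auto.
Qed.

Lemma cond_vars_ok_firstn {F} (cs : list (term F * term F)) j V :
  cond_vars_ok V cs -> cond_vars_ok V (firstn j cs).
Proof.
  revert j V; induction cs as [|[a b] cs IH]; intros [|j] V H; simpl in *; auto.
  destruct H; split; auto.
Qed.

Lemma conds_of_strong (Sy : system) f i rho : strong_cctrs Sy ->
  nth_error (rules Sy f) i = Some rho ->
  cond_vars_ok (vars_list (r_args rho)) (r_conds rho) /\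
  Forall (fun ab => wf_f Sy (fst ab)) (r_conds rho).
Proof.
  intros HR Hr. pose proof (rule_of_strong Sy f i rho HR Hr) as HC.
  destruct HC as (_ & _ & _ & Hwc & _ & _ & _ & _ & _ & _ & Hva). split.
  - apply cond_vars_ok_intro. intros j a b Hj. apply (Hva j a b Hj).
  - rewrite Forall_forall in *. intros ab Hab. apply Hwc; auto.
Qed.

Fixpoint conds_simulated (Sy : system) (sigma : nat -> gterm Sy)
  (cs : list (fterm Sy * fterm Sy)) (costs : list nat) : Prop :=
  match cs, costs with
  | [], [] => True
  | (a, b) :: r, c :: cr =>
      cs_steps Sy (zeta Sy (subst sigma (label Sy a))) (zeta Sy (subst sigma (label Sy b))) c /\
      conds_simulated Sy sigma r cr
  | _, _ => False
  end.

Lemma conds_simulated_app (Sy : system) sigma cs1 cs2 costs :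
  conds_simulated Sy sigma (cs1 ++ cs2) costs ->
  exists c1 c2, costs = c1 ++ c2 /\
    conds_simulated Sy sigma cs1 c1 /\ conds_simulated Sy sigma cs2 c2.
Proof.
  revert costs; induction cs1 as [|[a b] cs1 IH]; intros costs H; simpl in *.
  - exists [], costs; simpl; auto.
  - destruct costs as [|c costs]; [contradiction|]. destruct H as [H1 H2].
    destruct (IH _ H2) as (c1 & c2 & -> & H3 & H4). exists (c :: c1), c2; simpl; auto.
Qed.

Lemma conds_simulated_last (Sy : system) sigma cs a b costs :
  conds_simulated Sy sigma (cs ++ [(a, b)]) costs ->
  exists c1 c, costs = c1 ++ [c] /\ conds_simulated Sy sigma cs c1 /\
    cs_steps Sy (zeta Sy (subst sigma (label Sy a))) (zeta Sy (subst sigma (label Sy b))) c.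
Proof.
  intros H. apply conds_simulated_app in H as (c1 & c2 & -> & H1 & H2).
  destruct c2 as [|c [|]]; simpl in H2; try tauto. exists c1, c. tauto.
Qed.

Lemma conds_simulated_nil (Sy : system) sigma costs :
  conds_simulated Sy sigma [] costs -> costs = [].
Proof. destruct costs; simpl; tauto. Qed.

(** * Simulating one rule *)

Lemma repl_star_nth (Sy : system) R i b : i < length R -> nth i R false = b ->
  repl (map (star Sy) R) (S i) [star Sy b] = map (star Sy) R.
Proof.
  intros H1 <-. change (star Sy (nth i R false)) with ((fun b => star Sy b) (nth i R false)).
  rewrite <- map_nth. apply repl_nth_same. rewrite length_map; auto.
Qed.

Lemma repl_star_clear_bit (Sy : system) R i : i < length R ->
  repl (map (star Sy) R) (S i) [star Sy false] = map (star Sy) (clear_bit R i).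
Proof.
  rewrite repl_S. revert i; induction R; intros [|i] H; simpl in *; try lia; auto.
  f_equal. apply IHR; lia.
Qed.

Section RuleSimulation.
Variable Sy : system.
Variable f : fs Sy.
Variable i : nat.
Variable rho : rule (fs Sy).
Variable R : list bool.
Variable sigma : nat -> gterm Sy.
Hypothesis Hrule : nth_error (rules Sy f) i = Some rho.
Hypothesis HCR : cctrs_rule Sy f rho.
Hypothesis HlR : length R = m Sy f.
Hypothesis HRi : nth i R false = true.

Definition rule_vars := vars_list (r_args rho) ++ vars (r_rhs rho) ++
  flat_map (fun ab : fterm Sy * fterm Sy => vars (fst ab) ++ vars (snd ab)) (r_conds rho).

(* The variables x_1, ..., x_{m_f} of the rules of Xi(R) for [rho] are taken just above
   those of [rho]; anti-pattern variables come after them. *)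
Definition fresh := S (list_max rule_vars).
Definition slot_vars := seq fresh (m Sy f).

Definition rule_match (psi : nat -> hterm Sy) (x : nat) : hterm Sy :=
  if x <? fresh then zeta Sy (sigma x)
  else if x <? fresh + m Sy f then star Sy (nth (x - fresh) R false) else psi x.

Definition zinst (t : fterm Sy) : hterm Sy := zeta Sy (subst sigma (label Sy t)).
Definition zargs := map zinst (r_args rho).
Definition cond_rhss := map snd (r_conds rho).

(* The state f_{i+1}^j of a redex whose condition [j] is being evaluated ([i] is 0-based,
   the symbols of Xi(R) count rules from 1). *)
Definition cond_state j (L : list (hterm Sy)) : hterm Sy :=
  App (HFij f (S i) j) (zargs ++ repl (map (star Sy) R) (S i) L).

Lemma rule_index_lt : i < m Sy f.
Proof. unfold m. apply nth_error_Some. rewrite Hrule. discriminate. Qed.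

Lemma rule_nth_error_pred : nth_error (rules Sy f) (S i - 1) = Some rho.
Proof. now rewrite Nat.sub_succ, Nat.sub_0_r. Qed.

Lemma length_slot_vars : length slot_vars = m Sy f.
Proof. apply length_seq. Qed.

Lemma rule_vars_lt_fresh x : In x rule_vars -> x < fresh.
Proof. intros H. unfold fresh. apply list_max_in in H. lia. Qed.

Lemma args_vars_lt_fresh x : In x (vars_list (r_args rho)) -> x < fresh.
Proof. intros. apply rule_vars_lt_fresh, in_or_app; auto. Qed.

Lemma rhs_vars_lt_fresh x : In x (vars (r_rhs rho)) -> x < fresh.
Proof. intros. apply rule_vars_lt_fresh, in_or_app. right. apply in_or_app; auto. Qed.

Lemma cond_vars_lt_fresh a b x : In (a, b) (r_conds rho) -> In x (vars a ++ vars b) -> x < fresh.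
Proof.
  intros. apply rule_vars_lt_fresh, in_or_app. right. apply in_or_app. right.
  apply in_flat_map. exists (a, b). auto.
Qed.

Lemma cond_rhss_vars_lt_fresh L x : incl L cond_rhss -> In x (vars_list L) -> x < fresh.
Proof.
  intros HL Hx. apply in_flat_map in Hx as (b & Hb & Hx). apply HL in Hb.
  apply in_map_iff in Hb as ([a b'] & <- & Hb). eapply cond_vars_lt_fresh; eauto.
  apply in_or_app; auto.
Qed.

Lemma NoDup_args : NoDup (vars_list (r_args rho)).
Proof. exact (NoDup_app_remove_r _ _ (cctrs_rule_NoDup Sy f rho HCR)). Qed.

Lemma NoDup_args_cond_rhss j Q : NoDup Q -> (forall x, In x Q -> fresh <= x) ->
  NoDup (vars_list (r_args rho) ++ vars_list (firstn j cond_rhss) ++ Q).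
Proof.
  intros HQ HQf. pose proof (cctrs_rule_NoDup Sy f rho HCR) as H. fold cond_rhss in H.
  unfold vars_list in H. rewrite <- (firstn_skipn j cond_rhss), flat_map_app, app_assoc in H.
  apply NoDup_app_remove_r in H. rewrite app_assoc. apply NoDup_app; auto.
  intros x Hx HxQ. apply HQf in HxQ. apply in_app_or in Hx as [Hx|Hx].
  - apply args_vars_lt_fresh in Hx. lia.
  - apply in_flat_map in Hx as (b & Hb & Hx). apply in_firstn in Hb.
    assert (x < fresh) by (eapply cond_rhss_vars_lt_fresh, in_flat_map; eauto using incl_refl). lia.
Qed.

Lemma linear_rule_lhs g (Ms : list (hterm Sy)) :
  NoDup (vars_list (r_args rho) ++ vars_list Ms) ->
  (forall x, In x (vars_list Ms) -> ~ fresh <= x < fresh + m Sy f) ->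
  linear (App g (map (xi Sy true) (r_args rho) ++ repl (map Var slot_vars) (S i) Ms)).
Proof.
  intros Hnd Hout. unfold linear.
  rewrite vars_App, flat_map_app, (vars_repl_Var (F := hsym (fs Sy))).
  change (flat_map vars (map (xi Sy true) (r_args rho))) with (vars_list (map (xi Sy true) (r_args rho))).
  rewrite vars_list_map_xi.
  apply NoDup_app_inv in Hnd as (Hargs & HMs & Hdisj).
  apply NoDup_app; auto; [now apply NoDup_seq_hole|].
  intros x Hx Hx'. apply in_seq_hole in Hx' as [Hx'|Hx'].
  - apply args_vars_lt_fresh in Hx. lia.
  - exact (Hdisj x Hx Hx').
Qed.

Lemma rule_match_xi psi t : (forall x, In x (vars t) -> x < fresh) ->
  subst (rule_match psi) (xi Sy true t) = zinst t.
Proof.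
  intros H. unfold zinst. rewrite zeta_subst, zeta_label. apply subst_ext_in. intros x Hx.
  rewrite vars_xi in Hx. unfold rule_match. destruct (Nat.ltb_spec x fresh); auto.
  apply H in Hx. lia.
Qed.

Lemma rule_match_rhss psi L : incl L cond_rhss ->
  map (subst (rule_match psi)) (map (xi Sy true) L) = map zinst L.
Proof.
  intros H. rewrite map_map. apply map_ext_in. intros b Hb. apply rule_match_xi.
  intros x Hx. apply (cond_rhss_vars_lt_fresh L); [exact H|]. eapply in_vars_list; eauto.
Qed.

Lemma rule_match_lhs psi Ms :
  map (subst (rule_match psi)) (map (xi Sy true) (r_args rho) ++ repl (map Var slot_vars) (S i) Ms)
  = zargs ++ repl (map (star Sy) R) (S i) (map (subst (rule_match psi)) Ms).
Proof.
  rewrite map_app, map_repl. f_equal.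
  - rewrite map_map. apply map_ext_in. intros l Hl. apply rule_match_xi.
    intros x Hx. apply args_vars_lt_fresh. eapply in_vars_list; eauto.
  - f_equal. rewrite map_map. unfold slot_vars. rewrite <- HlR.
    apply map_seq_nth with (d := false). intros x Hx. simpl. unfold rule_match.
    destruct (Nat.ltb_spec x fresh); [lia|].
    destruct (Nat.ltb_spec x (fresh + m Sy f)); [reflexivity|lia].
Qed.

Lemma zeta_lhs_inst R' :
  zeta Sy (lhs_inst Sy f R' rho sigma) = App (HF f) (zargs ++ map (star Sy) R').
Proof. unfold lhs_inst. cbn [zeta fst snd]. rewrite map_map. reflexivity. Qed.

Lemma xi1_step : r_conds rho = [] ->
  cs_step Sy (zeta Sy (lhs_inst Sy f R rho sigma)) (zinst (r_rhs rho)) 1.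
Proof.
  intros Hc. pose proof rule_index_lt. rewrite zeta_lhs_inst.
  eapply cs_step_rule with (theta := rule_match Var).
  - split; cycle 1.
    + apply (xi_1 Sy f (S i) rho slot_vars); auto using rule_nth_error_pred, length_slot_vars; lia.
    + apply linear_rule_lhs; [|intros _ []]. simpl. rewrite app_nil_r.
      apply NoDup_args.
  - cbn [subst]. rewrite rule_match_lhs. f_equal. f_equal. apply repl_star_nth; auto. lia.
  - apply rule_match_xi, rhs_vars_lt_fresh.
Qed.

Lemma xi2_step a0 b0 rest : r_conds rho = (a0, b0) :: rest ->
  cs_step Sy (zeta Sy (lhs_inst Sy f R rho sigma)) (cond_state 1 [zinst a0]) 0.
Proof.
  intros Hc. pose proof rule_index_lt. rewrite zeta_lhs_inst.
  eapply cs_step_rule with (theta := rule_match Var).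
  - split; cycle 1.
    + apply (xi_2 Sy f (S i) rho slot_vars a0 b0 rest); auto using rule_nth_error_pred, length_slot_vars; lia.
    + apply linear_rule_lhs; [|intros _ []]. simpl. rewrite app_nil_r.
      apply NoDup_args.
  - cbn [subst]. rewrite rule_match_lhs. f_equal. f_equal. apply repl_star_nth; auto. lia.
  - cbn [subst]. rewrite rule_match_lhs. unfold cond_state. cbn [map].
    rewrite rule_match_xi; auto. intros x Hx.
    apply (cond_vars_lt_fresh a0 b0); [rewrite Hc; left; reflexivity|apply in_or_app; auto].
Qed.

Lemma xi3_step : r_conds rho <> [] ->
  cs_step Sy (cond_state (length (r_conds rho)) (map zinst cond_rhss)) (zinst (r_rhs rho)) 1.
Proof.
  intros Hne. pose proof rule_index_lt.
  eapply cs_step_rule with (theta := rule_match Var).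
  - split; cycle 1.
    + apply (xi_3 Sy f (S i) rho slot_vars); auto using rule_nth_error_pred, length_slot_vars; lia.
    + apply linear_rule_lhs.
      * pose proof (NoDup_args_cond_rhss (length cond_rhss) [] (NoDup_nil _)) as H'.
        rewrite firstn_all, app_nil_r in H'. rewrite vars_list_map_xi. apply H'. intros _ [].
      * intros x Hx. rewrite vars_list_map_xi in Hx.
        apply (cond_rhss_vars_lt_fresh cond_rhss) in Hx; [lia|apply incl_refl].
  - cbn [subst]. rewrite rule_match_lhs, rule_match_rhss; [reflexivity|apply incl_refl].
  - apply rule_match_xi, rhs_vars_lt_fresh.
Qed.

Lemma incl_firstn_cond_rhss j : incl (firstn j cond_rhss) cond_rhss.
Proof. intros b. apply in_firstn. Qed.

Lemma xi4_step j a b : 1 <= j < length (r_conds rho) -> nth_error (r_conds rho) j = Some (a, b) ->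
  cs_step Sy (cond_state j (map zinst (firstn j cond_rhss)))
    (cond_state (S j) (map zinst (firstn j cond_rhss) ++ [zinst a])) 0.
Proof.
  intros Hj Hn. pose proof rule_index_lt.
  eapply cs_step_rule with (theta := rule_match Var).
  - split; cycle 1.
    + apply (xi_4 Sy f (S i) rho slot_vars j a b); auto using rule_nth_error_pred, length_slot_vars; lia.
    + apply linear_rule_lhs; rewrite vars_list_map_xi.
      * pose proof (NoDup_args_cond_rhss j [] (NoDup_nil _) ltac:(intros _ [])) as H'.
        rewrite app_nil_r in H'. exact H'.
      * intros x Hx. apply cond_rhss_vars_lt_fresh in Hx; [lia|apply incl_firstn_cond_rhss].
  - cbn [subst]. rewrite rule_match_lhs, rule_match_rhss; auto using incl_firstn_cond_rhss.
  - cbn [subst]. rewrite rule_match_lhs, map_app, rule_match_rhss; auto using incl_firstn_cond_rhss.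
    cbn [map]. rewrite rule_match_xi; auto. intros x Hx.
    apply (cond_vars_lt_fresh a b); [eapply nth_error_In; eauto|apply in_or_app; auto].
Qed.

Lemma xi5_step j a b v psi : nth_error (r_conds rho) j = Some (a, b) -> ap Sy b v ->
  (forall x, In x (vars v) -> fresh + m Sy f <= x) -> NoDup (vars v) ->
  cs_step Sy (cond_state (S j) (map zinst (firstn j cond_rhss) ++ [subst psi v]))
    (zeta Sy (lhs_inst Sy f (clear_bit R i) rho sigma)) 0.
Proof.
  intros Hn Hap Hv1 Hv2. pose proof rule_index_lt. rewrite zeta_lhs_inst.
  assert (Hj : j < length (r_conds rho)) by (apply nth_error_Some; rewrite Hn; discriminate).
  eapply cs_step_rule with (theta := rule_match psi).
  - split; cycle 1.
    + apply (xi_5 Sy f (S i) rho slot_vars (S j) a b v);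
        auto using rule_nth_error_pred, length_slot_vars; try lia.
      now rewrite Nat.sub_succ, Nat.sub_0_r.
    + rewrite Nat.sub_succ, Nat.sub_0_r. apply linear_rule_lhs.
      * rewrite (vars_list_app (S := hsym (fs Sy))), vars_list_map_xi. change (vars_list [v]) with (vars v ++ []).
        rewrite app_nil_r. apply NoDup_args_cond_rhss; auto. intros x Hx. apply Hv1 in Hx. lia.
      * rewrite (vars_list_app (S := hsym (fs Sy))), vars_list_map_xi. change (vars_list [v]) with (vars v ++ []).
        rewrite app_nil_r. intros x Hx. apply in_app_or in Hx as [Hx|Hx]; [|apply Hv1 in Hx; lia].
        apply cond_rhss_vars_lt_fresh in Hx; [lia|apply incl_firstn_cond_rhss].
  - cbn [subst]. rewrite Nat.sub_succ, Nat.sub_0_r, rule_match_lhs, map_app, rule_match_rhss;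
      auto using incl_firstn_cond_rhss.
    cbn [map]. unfold cond_state. rewrite (subst_ext_in (rule_match psi) psi v); [reflexivity|].
    intros x Hx. apply Hv1 in Hx. unfold rule_match.
    destruct (Nat.ltb_spec x fresh); [lia|]. destruct (Nat.ltb_spec x (fresh + m Sy f)); [lia|auto].
  - cbn [subst]. rewrite rule_match_lhs. cbn [map subst]. rewrite repl_star_clear_bit; auto. lia.
Qed.

Lemma active_cond_state j L : length L = j -> active_ctx Sy (fun x => cond_state (S j) (L ++ [x])).
Proof.
  intros HL a b c H. unfold cond_state. rewrite !repl_S.
  replace (zargs ++ firstn i (map (star Sy) R) ++ (L ++ [a]) ++ skipn (S i) (map (star Sy) R))
    with ((zargs ++ firstn i (map (star Sy) R) ++ L) ++ a :: skipn (S i) (map (star Sy) R))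
    by (rewrite <- !app_assoc; reflexivity).
  replace (zargs ++ firstn i (map (star Sy) R) ++ (L ++ [b]) ++ skipn (S i) (map (star Sy) R))
    with ((zargs ++ firstn i (map (star Sy) R) ++ L) ++ b :: skipn (S i) (map (star Sy) R))
    by (rewrite <- !app_assoc; reflexivity).
  apply cs_ctx; auto. pose proof rule_index_lt. destruct HCR as (Hlen & _).
  simpl. unfold zargs. rewrite !length_app, length_firstn, !length_map. unfold fterm in *. lia.
Qed.

Lemma length_map_zinst_firstn j : j < length (r_conds rho) ->
  length (map zinst (firstn j cond_rhss)) = j.
Proof. intros H. rewrite length_map, length_firstn. unfold cond_rhss. rewrite length_map. lia. Qed.

Lemma cond_chain a0 b0 rest : r_conds rho = (a0, b0) :: rest ->
  forall q a b costs, nth_error (r_conds rho) q = Some (a, b) ->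
  conds_simulated Sy sigma (firstn q (r_conds rho)) costs ->
  cs_steps Sy (cond_state 1 [zinst a0])
    (cond_state (S q) (map zinst (firstn q cond_rhss) ++ [zinst a])) (list_sum costs).
Proof.
  intros Hc. induction q as [|q IH]; intros a b costs Hn Hcs.
  - rewrite Hc in Hn. simpl in Hn. inversion Hn; subst. apply conds_simulated_nil in Hcs.
    subst. constructor.
  - assert (HSq : S q < length (r_conds rho)) by (apply nth_error_Some; rewrite Hn; discriminate).
    destruct (nth_error (r_conds rho) q) as [[a' b']|] eqn:Hq;
      [|apply nth_error_None in Hq; lia].
    rewrite (firstn_S_nth_error _ _ _ Hq) in Hcs.
    apply conds_simulated_last in Hcs as (c1 & c & -> & Hc1 & Hab).
    assert (Hb' : nth_error cond_rhss q = Some b')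
      by (unfold cond_rhss; erewrite map_nth_error; eauto; reflexivity).
    rewrite list_sum_app.
    eapply cs_steps_trans; [exact (IH a' b' c1 eq_refl Hc1)|].
    eapply cs_steps_trans;
      [exact (active_ctx_steps Sy _ _ _ _ (active_cond_state q _ (length_map_zinst_firstn q ltac:(lia))) Hab)|].
    assert (E : map zinst (firstn (S q) cond_rhss) = map zinst (firstn q cond_rhss) ++ [zinst b'])
      by (rewrite (firstn_S_nth_error _ _ _ Hb'), map_app; reflexivity).
    apply cs_steps_one. fold (zinst b'). rewrite <- E.
    apply (xi4_step (S q) a b); auto. lia.
Qed.

Lemma cond_entry j a b costs :
  nth_error (r_conds rho) j = Some (a, b) ->
  conds_simulated Sy sigma (firstn j (r_conds rho)) costs ->
  cs_plus Sy (zeta Sy (lhs_inst Sy f R rho sigma))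
    (cond_state (S j) (map zinst (firstn j cond_rhss) ++ [zinst a])) (list_sum costs).
Proof.
  intros Hn Hcs.
  destruct (r_conds rho) as [|[a0 b0] rest] eqn:Hc; [destruct j; discriminate|].
  rewrite <- Hc in Hn, Hcs. eapply (cs_plus_intro Sy _ _ _ 0).
  - apply (xi2_step a0 b0 rest Hc).
  - apply (cond_chain a0 b0 rest Hc j a b costs Hn Hcs).
Qed.

Lemma simulate_success costs : conds_simulated Sy sigma (r_conds rho) costs ->
  cs_plus Sy (zeta Sy (lhs_inst Sy f R rho sigma)) (zinst (r_rhs rho)) (S (list_sum costs)).
Proof.
  intros Hcs. destruct (r_conds rho) as [|ab rest] eqn:Hc.
  { apply conds_simulated_nil in Hcs as ->. eapply (cs_plus_intro Sy _ _ _ 1 0).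
    - now apply xi1_step.
    - constructor. }
  destruct (exists_last (l := ab :: rest) ltac:(discriminate)) as (cs' & [a b] & E).
  rewrite E in Hcs. apply conds_simulated_last in Hcs as (c1 & c & -> & Hc1 & Hab).
  rewrite <- Hc in E. set (n := length cs').
  assert (Hn : nth_error (r_conds rho) n = Some (a, b))
    by (rewrite E, nth_error_app2, Nat.sub_diag; auto).
  assert (Hf : firstn n (r_conds rho) = cs') by (rewrite E; apply firstn_length_app).
  assert (Hlen : S n = length (r_conds rho)) by (rewrite E, length_app; simpl; lia).
  assert (EB : map zinst (firstn n cond_rhss) ++ [zinst b] = map zinst cond_rhss).
  { assert (Hb : nth_error cond_rhss n = Some b)
      by (unfold cond_rhss; erewrite map_nth_error; eauto; reflexivity).
    rewrite <- (firstn_all cond_rhss) at 2.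
    replace (length cond_rhss) with (S n) by (unfold cond_rhss; rewrite length_map; lia).
    rewrite (firstn_S_nth_error _ _ _ Hb), map_app. reflexivity. }
  replace (S (list_sum (c1 ++ [c]))) with (list_sum c1 + (c + 1))
    by (rewrite list_sum_app; simpl; lia).
  rewrite <- Hf in Hc1.
  apply (cs_plus_trans_steps Sy _ _ _ _ _ (cond_entry n a b c1 Hn Hc1)).
  eapply cs_steps_trans;
    [exact (active_ctx_steps Sy _ _ _ _ (active_cond_state _ _ (length_map_zinst_firstn n ltac:(lia))) Hab)|].
  fold (zinst b). rewrite EB, Hlen. apply cs_steps_one, xi3_step. congruence.
Qed.

Lemma ap_complete_cond_rhs a b : In (a, b) (r_conds rho) -> ap_complete Sy b.
Proof.
  intros Hab. destruct HCR as (_ & _ & _ & Hwc & _ & Hcb & _ & Hlb & _).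
  rewrite Forall_forall in Hwc, Hcb, Hlb.
  assert (Hb : In b cond_rhss) by (apply in_map_iff; exists (a, b); auto).
  apply ap_complete_cterm; auto; [apply (Hwc _ Hab)|apply (Hlb _ Hb)].
Qed.

Lemma simulate_fail j a b u tau c costs :
  nth_error (r_conds rho) j = Some (a, b) ->
  conds_simulated Sy sigma (firstn j (r_conds rho)) costs ->
  lnf Sy u -> wf_g Sy u -> linear u -> disjoint (vars u) (vars b) ->
  ~ unifiable (erase Sy u) b ->
  cs_steps Sy (zinst a) (zeta Sy (subst tau u)) c ->
  cs_plus Sy (zeta Sy (lhs_inst Sy f R rho sigma))
    (zeta Sy (lhs_inst Sy f (clear_bit R i) rho sigma)) (list_sum costs + c).
Proof.
  intros Hn Hcs Hlu Hwu Hlin Hd Hnu Hsteps.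
  destruct (ap_complete_cond_rhs a b (nth_error_In _ _ Hn) u Hlu Hwu Hlin Hd) as [HA|HU];
    [|contradiction].
  destruct (HA (fresh + m Sy f)) as (v & psi & Hap & Hv1 & Hv2 & Hv3).
  assert (Hj : j < length (r_conds rho)) by (apply nth_error_Some; rewrite Hn; discriminate).
  rewrite zeta_subst, <- Hv3, subst_comp in Hsteps.
  rewrite <- (Nat.add_0_r (list_sum costs + c)), <- Nat.add_assoc.
  apply (cs_plus_trans_steps Sy _ _ _ _ _ (cond_entry j a b costs Hn Hcs)).
  eapply cs_steps_trans;
    [exact (active_ctx_steps Sy _ _ _ _ (active_cond_state _ _ (length_map_zinst_firstn j Hj)) Hsteps)|].
  apply cs_steps_one. eapply xi5_step; eauto.
Qed.

Lemma simulate_cond_entry j a b costs :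
  nth_error (r_conds rho) j = Some (a, b) ->
  conds_simulated Sy sigma (firstn j (r_conds rho)) costs ->
  exists D c, active_ctx Sy D /\ cs_plus Sy (zeta Sy (lhs_inst Sy f R rho sigma)) (D (zinst a)) c.
Proof.
  intros Hn Hcs.
  assert (Hj : j < length (r_conds rho)) by (apply nth_error_Some; rewrite Hn; discriminate).
  exists (fun x => cond_state (S j) (map zinst (firstn j cond_rhss) ++ [x])), (list_sum costs).
  split; [apply active_cond_state, length_map_zinst_firstn, Hj|].
  exact (cond_entry j a b costs Hn Hcs).
Qed.

End RuleSimulation.

Lemma ap_complete_rule_args (Sy : system) f rho : cctrs_rule Sy f rho ->
  Forall (ap_complete Sy) (r_args rho).
Proof.
  intros (_ & Hwl & _ & _ & Hcl & _ & Hlin & _). unfold linear in Hlin. rewrite vars_App in Hlin.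
  rewrite Forall_forall in *. intros l Hl.
  apply ap_complete_cterm; auto. eapply NoDup_vars_list_elem; eauto.
Qed.

Lemma NoDup_xi6_lhs (Q : list nat) n M k i : NoDup Q -> (forall x, In x Q -> n + M <= x) ->
  NoDup (seq_hole 0 n k Q ++ seq_hole n M i []).
Proof.
  intros HQ HQ2. apply NoDup_app.
  - apply NoDup_seq_hole; auto. intros x Hx. apply HQ2 in Hx. lia.
  - apply NoDup_seq_hole; [constructor|intros _ []].
  - intros x H1 H2. apply in_seq_hole in H1 as [H1|H1]; apply in_seq_hole in H2 as [H2|[]].
    + lia.
    + apply HQ2 in H1. lia.
Qed.

Lemma xi6_step (Sy : system) f R i rho (ts : list (gterm Sy)) k v psi :
  nth_error (rules Sy f) i = Some rho -> nth i R false = true ->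
  length (r_args rho) = ar Sy f -> length R = m Sy f -> length ts = ar Sy f -> k < ar Sy f ->
  ap Sy (nth k (r_args rho) (Var 0)) v -> (forall x, In x (vars v) -> ar Sy f + m Sy f <= x) ->
  NoDup (vars v) -> subst psi v = zeta Sy (nth k ts (Var 0)) ->
  cs_step Sy (zeta Sy (App (f, R) ts)) (zeta Sy (App (f, clear_bit R i) ts)) 0.
Proof.
  intros Hrule HRi Hargs HlR Hlen Hk Hap Hv1 Hv2 Hv3.
  assert (Hi : i < m Sy f) by (unfold m; apply nth_error_Some; rewrite Hrule; discriminate).
  set (n := ar Sy f) in *. set (M := m Sy f) in *.
  set (theta := fun x => if x <? n then zeta Sy (nth x ts (Var 0))
                         else if x <? n + M then star Sy (nth (x - n) R false) else psi x).
  assert (HE1 : map (subst theta) (repl (map Var (seq 0 n)) (S k) [v]) = map (zeta Sy) ts).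
  { rewrite map_repl, map_map.
    replace (map (fun x => subst theta (Var x)) (seq 0 n)) with (map (zeta Sy) ts).
    - cbn [map]. rewrite (subst_ext_in _ psi), Hv3, <- nth_map_zeta.
      + apply repl_nth_same. rewrite length_map. unfold gterm in *. lia.
      + intros x Hx. apply Hv1 in Hx. unfold theta.
        destruct (Nat.ltb_spec x n); [lia|]. destruct (Nat.ltb_spec x (n + M)); [lia|auto].
    - symmetry. rewrite <- Hlen. apply map_seq_nth with (d := Var 0). intros x Hx. simpl.
      unfold theta. rewrite Nat.sub_0_r. unfold gterm in *.
      destruct (Nat.ltb_spec x n); [reflexivity|lia]. }
  assert (HE2 : map (subst theta) (map Var (seq n M)) = map (star Sy) R).
  { rewrite map_map, <- HlR. apply map_seq_nth with (d := false). intros x Hx. simpl.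
    unfold theta. destruct (Nat.ltb_spec x n); [lia|].
    destruct (Nat.ltb_spec x (n + M)); [reflexivity|lia]. }
  eapply cs_step_rule with (theta := theta).
  - split; cycle 1.
    + apply (xi_6 Sy f (S i) rho (seq n M) (seq 0 n) (S k) (nth k (r_args rho) (Var 0)) v);
        rewrite ?length_seq, ?Nat.sub_succ, ?Nat.sub_0_r; auto; try lia.
      apply nth_error_nth'. unfold fterm in *. lia.
    + unfold linear. rewrite vars_App, flat_map_app, !(vars_repl_Var (F := hsym (fs Sy))).
      cbn [flat_map]. rewrite !app_nil_r. apply NoDup_xi6_lhs; auto.
  - cbn [subst zeta fst snd]. f_equal. rewrite map_app, HE1, map_repl, HE2. f_equal.
    apply repl_star_nth; auto. lia.
  - cbn [subst zeta fst snd]. f_equal. rewrite map_app, HE1, map_repl, HE2. f_equal.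
    apply repl_star_clear_bit. lia.
Qed.

Lemma simulate_bot (Sy : system) (HR : strong_cctrs Sy) f R i rho us (sigma : nat -> gterm Sy) :
  nth_error (rules Sy f) i = Some rho -> nth i R false = true ->
  Forall (lnf Sy) us -> NoDup (vars_list us) ->
  disjoint (vars_list us) (vars_list (r_args rho)) ->
  ~ unifiable (App f (map (erase Sy) us)) (App f (r_args rho)) ->
  wf_g Sy (App (f, R) (map (subst sigma) us)) ->
  cs_step Sy (zeta Sy (App (f, R) (map (subst sigma) us)))
             (zeta Sy (App (f, clear_bit R i) (map (subst sigma) us))) 0.
Proof.
  intros Hrule HRi Hlus Hnus Hd Hnu Hw.
  pose proof (rule_of_strong Sy f i rho HR Hrule) as HCR.
  assert (Hargs : length (r_args rho) = ar Sy f) by apply HCR.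
  apply wf_App_inv in Hw as (HlR & Hlen & Hwus). simpl in HlR, Hlen.
  assert (Hwu : Forall (wf_g Sy) us).
  { rewrite Forall_forall in *. intros u Hu. apply (wf_subst_inv _ _ sigma u).
    apply Hwus, in_map; auto. }
  rewrite length_map in Hlen.
  destruct (ap_complete_args Sy (r_args rho) us (ap_complete_rule_args Sy f rho HCR))
    as [[k [Hk HA]]|[th Hth]]; auto.
  { transitivity (ar Sy f); [exact Hargs|symmetry; exact Hlen]. }
  { apply (NoDup_app_remove_r _ _ (cctrs_rule_NoDup Sy f rho HCR)). }
  2: { exfalso. apply Hnu. exists th. simpl. rewrite Hth. reflexivity. }
  destruct (HA (ar Sy f + m Sy f)) as (v & psi & Hap & Hv1 & Hv2 & Hv3).
  apply (xi6_step Sy f R i rho _ k v (fun x => subst (fun y => zeta Sy (sigma y)) (psi x)));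
    rewrite ?length_map; auto; try (unfold fterm in *; lia).
  rewrite <- subst_comp, Hv3, <- zeta_subst. f_equal.
  symmetry. rewrite (nth_indep (map (subst sigma) us) (Var 0) (subst sigma (Var 0))), map_nth;
    [reflexivity|].
  rewrite length_map. unfold fterm, gterm in *. lia.
Qed.

(** * Simulating labeled reduction *)

Lemma wf_lhs_inst_inv (Sy : system) f R rho sigma :
  wf_g Sy (lhs_inst Sy f R rho sigma) -> length R = m Sy f /\
  (forall x, In x (vars_list (r_args rho)) -> wf_g Sy (sigma x)).
Proof.
  intros H. unfold lhs_inst in H. apply wf_App_inv in H as (H1 & H2 & H3). split; auto.
  intros x Hx. apply in_flat_map in Hx as (l & Hl & Hx).
  rewrite Forall_forall in H3.
  assert (Hw : wf_g Sy (subst sigma (label Sy l))) by (apply H3, in_map_iff; eauto).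
  apply wf_subst_inv in Hw as [_ Hw]. apply Hw. rewrite vars_label; auto.
Qed.

Lemma wf_cond_lhs_inst (Sy : system) (HR : strong_cctrs Sy) f i rho sigma j a b :
  nth_error (rules Sy f) i = Some rho -> nth_error (r_conds rho) j = Some (a, b) ->
  (forall x, In x (vars_list (r_args rho)) -> wf_g Sy (sigma x)) ->
  (forall x, In x (vars_list (map snd (firstn j (r_conds rho)))) -> wf_g Sy (sigma x)) ->
  wf_g Sy (subst sigma (label Sy a)).
Proof.
  intros Hr Hn Hargs Hpre.
  destruct (rule_of_strong Sy f i rho HR Hr) as (_ & _ & _ & Hwc & _ & _ & _ & _ & _ & _ & Hva).
  apply wf_label_inst with (V := vars_list (r_args rho) ++ vars_list (firstn j (map snd (r_conds rho)))).
  - rewrite Forall_forall in Hwc. apply (Hwc (a, b)). eapply nth_error_In; eauto.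
  - eapply Hva; eauto.
  - intros x Hx. apply in_app_or in Hx as [Hx|Hx]; auto. apply Hpre. rewrite <- firstn_map. exact Hx.
Qed.

Scheme lstep_min := Minimality for lstep Sort Prop
with lsteps_min := Minimality for lsteps Sort Prop
with lconds_min := Minimality for lconds Sort Prop.
Combined Scheme lstep_lsteps_lconds_min from lstep_min, lsteps_min, lconds_min.

Section Simulation.
Variable Sy : system.
Hypothesis HR : strong_cctrs Sy.

(* Well-formedness is carried along: the rules of Xi(R) only match images under [zeta] of
   terms whose arities and label lengths are right. *)
Definition step_simulated (s t : gterm Sy) (c : nat) : Prop :=
  wf_g Sy s -> wf_g Sy t /\ cs_plus Sy (zeta Sy s) (zeta Sy t) c.

Definition steps_simulated (s t : gterm Sy) (c : nat) : Prop :=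
  wf_g Sy s -> wf_g Sy t /\ cs_steps Sy (zeta Sy s) (zeta Sy t) c.

Definition lconds_simulated (sigma : nat -> gterm Sy) (cs : list (fterm Sy * fterm Sy))
  (costs : list nat) : Prop :=
  forall V, (forall x, In x V -> wf_g Sy (sigma x)) -> cond_vars_ok V cs ->
    Forall (fun ab => wf_f Sy (fst ab)) cs ->
    (forall x, In x (vars_list (map snd cs)) -> wf_g Sy (sigma x)) /\
    conds_simulated Sy sigma cs costs.

Lemma cond_prefix_simulated f R i rho sigma j a b costs :
  nth_error (rules Sy f) i = Some rho -> nth_error (r_conds rho) j = Some (a, b) ->
  lconds_simulated sigma (firstn j (r_conds rho)) costs -> wf_g Sy (lhs_inst Sy f R rho sigma) ->
  wf_g Sy (subst sigma (label Sy a)) /\ conds_simulated Sy sigma (firstn j (r_conds rho)) costs.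
Proof.
  intros Hr Hn IHc Hw.
  destruct (wf_lhs_inst_inv _ _ _ _ _ Hw) as [_ HwV].
  destruct (conds_of_strong Sy f i rho HR Hr) as [Hok Hwc].
  destruct (IHc _ HwV (cond_vars_ok_firstn _ _ _ Hok) (Forall_firstn _ _ _ Hwc)) as [Hwb Hcs].
  split; [exact (wf_cond_lhs_inst Sy HR f i rho sigma j a b Hr Hn HwV Hwb)|exact Hcs].
Qed.

Lemma success_simulated f R i rho sigma costs :
  nth_error (rules Sy f) i = Some rho -> nth i R false = true ->
  lconds_simulated sigma (r_conds rho) costs ->
  step_simulated (lhs_inst Sy f R rho sigma) (subst sigma (label Sy (r_rhs rho)))
    (S (list_sum costs)).
Proof.
  intros Hr HRi IHc Hw.
  destruct (wf_lhs_inst_inv _ _ _ _ _ Hw) as [HlR HwV].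
  destruct (conds_of_strong Sy f i rho HR Hr) as [Hok Hwc].
  destruct (IHc _ HwV Hok Hwc) as [Hwb Hcs].
  pose proof (rule_of_strong Sy f i rho HR Hr) as HCR.
  split; [|eapply simulate_success; eauto].
  destruct HCR as (_ & _ & Hwr & _ & _ & _ & _ & _ & _ & Hvr & _).
  apply wf_label_inst with (V := vars_list (r_args rho) ++ vars_list (map snd (r_conds rho)));
    auto.
  intros x Hx. apply in_app_or in Hx as [Hx|Hx]; [apply HwV|apply Hwb]; exact Hx.
Qed.

Lemma fail_simulated f R i rho sigma j costs a b u tau c :
  nth_error (rules Sy f) i = Some rho -> nth i R false = true ->
  nth_error (r_conds rho) j = Some (a, b) ->
  lconds_simulated sigma (firstn j (r_conds rho)) costs ->
  lnf Sy u -> linear u -> disjoint (vars u) (vars b) -> ~ unifiable (erase Sy u) b ->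
  steps_simulated (subst sigma (label Sy a)) (subst tau u) c ->
  step_simulated (lhs_inst Sy f R rho sigma) (lhs_inst Sy f (clear_bit R i) rho sigma)
    (list_sum costs + c).
Proof.
  intros Hr HRi Hn IHc Hlu Hlin Hd Hnu IHs Hw.
  destruct (cond_prefix_simulated f R i rho sigma j a b costs Hr Hn IHc Hw) as [Hwa Hcs].
  destruct (IHs Hwa) as [Hwu Hst]. apply wf_subst_inv in Hwu as [Hwu _].
  destruct (wf_lhs_inst_inv _ _ _ _ _ Hw) as [HlR _].
  split; [now apply wf_clear_bit|].
  eapply simulate_fail; eauto using rule_of_strong.
Qed.

Lemma labeled_reduction_simulated :
  (forall s t c, lstep Sy s t c -> step_simulated s t c) /\
  (forall s t c, lsteps Sy s t c -> steps_simulated s t c) /\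
  (forall sigma cs costs, lconds Sy sigma cs costs -> lconds_simulated sigma cs costs).
Proof.
  apply lstep_lsteps_lconds_min.
  - intros f R i rho us sigma Hr HRi Hlus Hnd Hd Hnu Hw. split; [now apply wf_clear_bit|].
    eapply (cs_plus_intro Sy _ _ _ 0 0); [eapply simulate_bot; eauto|constructor].
  - intros f R i rho sigma costs Hr HRi _ IHc. exact (success_simulated f R i rho sigma costs Hr HRi IHc).
  - intros f R i rho sigma j costs a b u tau c Hr HRi _ IHc Hn Hlu Hlin Hd Hnu _ IHs.
    eapply fail_simulated; eauto.
  - intros g pre a a' post c _ IH Hw.
    destruct (wf_ctx_inv _ _ _ _ _ Hw) as (Hwa & Hrep & Hlen).
    destruct (IH Hwa) as [Hwa' Hp]. split; auto.
    rewrite !zeta_ctx. exact (active_ctx_plus Sy _ _ _ _ (active_ctx_zeta Sy g pre post Hlen) Hp).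
  - intros s Hs. split; [exact Hs|constructor].
  - intros s u t c1 c2 _ IH1 _ IH2 Hw.
    destruct (IH1 Hw) as [Hwu Hp]; destruct (IH2 Hwu) as [Hwt Hq]. split; auto.
    eapply cs_steps_trans; eauto. apply cs_plus_steps; auto.
  - intros sigma V _ _ _. split; simpl; auto. intros x [].
  - intros sigma a b rest c costs _ IHs _ IHr V HV Hok Hwf.
    destruct Hok as [Hia Hok']. inversion Hwf as [|? ? Hwa Hwf']; subst.
    destruct (IHs (wf_label_inst Sy sigma a V Hwa Hia HV)) as [Hwb Hst].
    apply wf_subst_inv in Hwb as [_ Hwb]. rewrite vars_label in Hwb.
    destruct (IHr (V ++ vars b)) as [Hw2 Hcs]; auto.
    { intros x Hx. apply in_app_or in Hx as [Hx|Hx]; [apply HV|apply Hwb]; exact Hx. }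
    split; [|simpl; auto].
    intros x Hx. apply in_app_or in Hx as [Hx|Hx]; [apply Hwb|apply Hw2]; exact Hx.
Qed.

Lemma lsub_simulated s t : lsub Sy s t -> wf_g Sy s ->
  wf_g Sy t /\ exists D c, active_ctx Sy D /\ cs_plus Sy (zeta Sy s) (D (zeta Sy t)) c.
Proof.
  induction 1 as [f R i rho sigma j costs a b Hr HRi Hlc Hn|g args a t Hin H IH]; intros Hw.
  - destruct (cond_prefix_simulated f R i rho sigma j a b costs Hr Hn
                (proj2 (proj2 labeled_reduction_simulated) _ _ _ Hlc) Hw) as [Hwa Hcs].
    destruct (wf_lhs_inst_inv _ _ _ _ _ Hw) as [HlR _].
    split; [exact Hwa|]. eapply simulate_cond_entry; eauto using rule_of_strong.
  - apply in_split in Hin as (pre & post & ->).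
    destruct (wf_ctx_inv _ _ _ _ _ Hw) as (Hwa & _ & Hlen).
    destruct (IH Hwa) as [Hwt (D & c & HD & Hp)]. split; auto.
    exists (fun x => App (HF (fst g)) (map (zeta Sy) pre ++ D x ::
                                     (map (zeta Sy) post ++ map (star Sy) (snd g)))), c.
    split.
    + apply (active_ctx_comp Sy (fun x => App (HF (fst g))
        (map (zeta Sy) pre ++ x :: (map (zeta Sy) post ++ map (star Sy) (snd g)))) D); auto.
      apply active_ctx_zeta; auto.
    + rewrite zeta_ctx. exact (active_ctx_plus Sy _ _ _ _ (active_ctx_zeta Sy g pre post Hlen) Hp).
Qed.

End Simulation.

Lemma dependent_choice {T} (P : T -> Prop) (r : T -> T -> Prop) x0 :
  P x0 -> (forall x, P x -> exists y, r x y /\ P y) ->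
  exists u : nat -> T, u 0 = x0 /\ forall n, r (u n) (u (S n)).
Proof.
  intros H0 Hsucc.
  set (next := fun x : {x | P x} =>
    let w := constructive_indefinite_description _ (Hsucc (proj1_sig x) (proj2_sig x)) in
    exist P (proj1_sig w) (proj2 (proj2_sig w))).
  set (it := fix it (n : nat) : {x | P x} :=
    match n with 0 => exist P x0 H0 | S k => next (it k) end).
  exists (fun n => proj1_sig (it n)). split; [reflexivity|].
  intros n. exact (proj1 (proj2_sig (constructive_indefinite_description _
    (Hsucc (proj1_sig (it n)) (proj2_sig (it n)))))).
Qed.

(* Each link yields a non-empty reduction to the next term inside an active context, so the
   reduction can always be continued from wherever it has got to. *)
Lemma cs_infinite_of_chain (Sy : system) (w : nat -> hterm Sy) :
  (forall n, exists D c, active_ctx Sy D /\ cs_plus Sy (w n) (D (w (S n))) c) ->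
  exists u : nat -> hterm Sy, u 0 = w 0 /\ forall n, exists c, cs_step Sy (u n) (u (S n)) c.
Proof.
  intros Hchain.
  apply (dependent_choice (fun x => exists n C c, active_ctx Sy C /\ cs_steps Sy x (C (w n)) c)
           (fun x y => exists c, cs_step Sy x y c)).
  { exists 0, (fun x => x), 0. split; [apply active_ctx_id|constructor]. }
  intros x (n & C & c & HC & Hst).
  inversion Hst as [x' Hx|x' y t c1 c2 H1 H2 Hx]; subst.
  - destruct (Hchain n) as (D & c' & HD & Hp).
    destruct (active_ctx_plus Sy C _ _ _ HC Hp) as (y & c1 & c2 & Hy1 & Hy2 & _).
    exists y. split; eauto. exists (S n), (fun x => C (D x)), c2.
    split; auto using active_ctx_comp.
  - exists y. split; eauto.
Qed.

Theorem theorem5 (Sy : system) (HR : strong_cctrs Sy) (s : gterm Sy) (Hs : wf_g Sy s) :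
  (forall (t : gterm Sy) (N : nat), wf_g Sy t ->
     lsteps Sy s t N -> cs_steps Sy (zeta Sy s) (zeta Sy t) N) /\
  (linf Sy s ->
     exists u : nat -> hterm Sy, u 0 = zeta Sy s /\
       forall n, exists c, cs_step Sy (u n) (u (S n)) c).
Proof.
  destruct (labeled_reduction_simulated Sy HR) as (Hstep & Hsteps & _).
  split.
  - intros t N _ H. exact (proj2 (Hsteps _ _ _ H Hs)).
  - intros (u & Hu0 & Hu).
    assert (Hwf : forall n, wf_g Sy (u n)).
    { induction n; [now rewrite Hu0|].
      destruct (Hu n) as [[c Hc]|Hc].
      - exact (proj1 (Hstep _ _ _ Hc IHn)).
      - exact (proj1 (lsub_simulated Sy HR _ _ Hc IHn)). }
    rewrite <- Hu0. apply (cs_infinite_of_chain Sy (fun n => zeta Sy (u n))).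
    intros n. destruct (Hu n) as [[c Hc]|Hc].
    + exists (fun x => x), c. split; [apply active_ctx_id|exact (proj2 (Hstep _ _ _ Hc (Hwf n)))].
    + exact (proj2 (lsub_simulated Sy HR _ _ Hc (Hwf n))).
Qed.
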